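(* Fix unit vectors $A,B,C\in\mathbb S^2\subset\operatorname{Im}\mathbb H$. Let $\bar\nu:\mathbb S^2\times\mathbb S^2\to\mathbb R^3$, $\bar\nu(x,y)=(x\cdot y,x\cdot C,y\cdot C)$, let $\pi_X:\mathbb S^3\to\mathbb S^2$, $\pi_X(p)=\bar pXp$, let $\nu=\bar\nu\circ(\pi_A\times\pi_B):\mathbb S^3\times\mathbb S^3\to\mathbb R^3$, and let $\Delta=\bar\nu(\mathbb S^2\times\mathbb S^2)$, with interior $\mathring\Delta$, boundary $\partial\Delta$, and $V=\{(1,1,1),(1,-1,-1),(-1,1,-1),(-1,-1,1)\}$. For $(x,y)\in\mathbb S^2\times\mathbb S^2$: (1) if $\dim\operatorname{Span}\{x,y,C\}=1$, then $\bar\nu(x,y)\in V$, $\bar\nu^{-1}(\bar\nu(x,y))=\{(x,y)\}$, and $\nu^{-1}(\bar\nu(x,y))$ is a $2$-torus; (2) if $\dim\operatorname{Span}\{x,y,C\}=2$, then $\bar\nu(x,y)\in\partial\Delta\setminus V$, $\bar\nu^{-1}(\bar\nu(x,y))$ is a circle, and $\nu^{-1}(\bar\nu(x,y))$ is a $3$-torus; (3) if $\dim\operatorname{Span}\{x,y,C\}=3$, then $\bar\nu(x,y)\in\mathring\Delta$, $\bar\nu^{-1}(\bar\nu(x,y))$ is a disjoint union of two circles, and $\nu^{-1}(\bar\nu(x,y))$ is a disjoint union of two $3$-tori. Moreover the four points with $x,y\in\{\pm C\}$ map bijectively onto $V$: $\bar\nu(C,C)=(1,1,1)$, $\bar\nu(C,-C)=(-1,1,-1)$,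 $\bar\nu(-C,C)=(-1,-1,1)$, $\bar\nu(-C,-C)=(1,-1,-1)$.
   Context: $\mathbb S^3$ is the unit quaternions, $\mathbb S^2$ the unit imaginary quaternions, $\cdot$ the Euclidean inner product on $\operatorname{Im}\mathbb H\cong\mathbb R^3$. The map $\pi_A\times\pi_B$ is a $\mathbb T^2$-bundle (each $\pi_X$ is a circle bundle, a Hopf fibration). $\nu$ is the multi-moment map of the $\mathbb T^3$-action $(p,q)\mapsto(e^{At_1}pe^{-Ct_3},e^{Bt_2}qe^{-Ct_3})$ on the homogeneous nearly Kähler $\mathbb S^3\times\mathbb S^3$, in a suitable basis of $\Lambda^2\mathfrak t^*\cong\mathbb R^3$. *)

From Stdlib Require Import Reals List.
Open Scope R_scope.

Definition edR (x y : R) : R := Rabs (x - y).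
Definition dprod {X Y : Type} (dX : X -> X -> R) (dY : Y -> Y -> R)
  (p q : X * Y) : R := sqrt (dX (fst p) (fst q) ^ 2 + dY (snd p) (snd q) ^ 2).

Definition R2 : Type := (R * R)%type.
Definition R3 : Type := (R * R * R)%type.      (* = Im H *)
Definition R4 : Type := (R * R * R * R)%type.  (* = H, (real, i, j, k) *)
Definition ed2 : R2 -> R2 -> R := dprod edR edR.
Definition ed3 : R3 -> R3 -> R := dprod ed2 edR.
Definition ed4 : R4 -> R4 -> R := dprod ed3 edR.

Definition cont_on {X Y : Type} (dX : X -> X -> R) (dY : Y -> Y -> R)
  (S : X -> Prop) (f : X -> Y) : Prop :=
  forall x, S x -> forall eps, 0 < eps -> exists delta, 0 < delta /\
    forall x', S x' -> dX x x' < delta -> dY (f x) (f x') < eps.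

Definition homeomorphic {X Y : Type} (dX : X -> X -> R) (dY : Y -> Y -> R)
  (S : X -> Prop) (T : Y -> Prop) : Prop :=
  exists (f : X -> Y) (g : Y -> X),
    (forall x, S x -> T (f x)) /\ (forall y, T y -> S (g y)) /\
    (forall x, S x -> g (f x) = x) /\ (forall y, T y -> f (g y) = y) /\
    cont_on dX dY S f /\ cont_on dY dX T g.

Definition circle (p : R2) : Prop := let '(a, b) := p in a ^ 2 + b ^ 2 = 1.
Definition torus2 (p : R2 * R2) : Prop := circle (fst p) /\ circle (snd p).
Definition d_torus2 := dprod ed2 ed2.
Definition torus3 (p : R2 * R2 * R2) : Prop :=
  circle (fst (fst p)) /\ circle (snd (fst p)) /\ circle (snd p).
Definition d_torus3 := dprod (dprod ed2 ed2) ed2.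
(* disjoint union of two circles: S^1 x {0,1} *)
Definition two_circles (p : R2 * R) : Prop := circle (fst p) /\ (snd p = 0 \/ snd p = 1).
Definition d_two_circles := dprod ed2 edR.
(* disjoint union of two 3-tori: T^3 x {0,1} *)
Definition two_torus3 (p : R2 * R2 * R2 * R) : Prop :=
  torus3 (fst p) /\ (snd p = 0 \/ snd p = 1).
Definition d_two_torus3 := dprod d_torus3 edR.

Definition dot (u v : R3) : R :=
  let '(u1, u2, u3) := u in let '(v1, v2, v3) := v in u1 * v1 + u2 * v2 + u3 * v3.
Definition vopp (u : R3) : R3 := let '(u1, u2, u3) := u in (- u1, - u2, - u3).
Definition vzero : R3 := (0, 0, 0).
Definition vadd (u v : R3) : R3 :=
  let '(u1, u2, u3) := u in let '(v1, v2, v3) := v in (u1 + v1, u2 + v2, u3 + v3).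
Definition vscale (c : R) (u : R3) : R3 := let '(u1, u2, u3) := u in (c * u1, c * u2, c * u3).
Definition S2 (x : R3) : Prop := dot x x = 1.

Fixpoint lincomb (cs : list R) (vs : list R3) : R3 :=
  match cs, vs with
  | c :: cs', v :: vs' => vadd (vscale c v) (lincomb cs' vs')
  | _, _ => vzero
  end.
Definition in_span (vs : list R3) (v : R3) : Prop :=
  exists cs, length cs = length vs /\ lincomb cs vs = v.
Definition lin_indep (vs : list R3) : Prop :=
  forall cs, length cs = length vs -> lincomb cs vs = vzero -> Forall (fun c => c = 0) cs.
Definition span_dim (vs : list R3) (k : nat) : Prop :=
  exists b, length b = k /\ lin_indep b /\ (forall v, in_span b v <-> in_span vs v).

Definition qmul (p q : R4) : R4 :=
  let '(a1, b1, c1, d1) := p in let '(a2, b2, c2, ed2) := q in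
  (a1 * a2 - b1 * b2 - c1 * c2 - d1 * ed2,
   a1 * b2 + b1 * a2 + c1 * ed2 - d1 * c2,
   a1 * c2 - b1 * ed2 + c1 * a2 + d1 * b2,
   a1 * ed2 + b1 * c2 - c1 * b2 + d1 * a2).
Definition qconj (p : R4) : R4 := let '(a, b, c, d) := p in (a, - b, - c, - d).
Definition im_to_H (x : R3) : R4 := let '(x1, x2, x3) := x in (0, x1, x2, x3).
Definition H_im (p : R4) : R3 := let '(_, b, c, d) := p in (b, c, d).
Definition S3 (p : R4) : Prop :=
  let '(a, b, c, d) := p in a ^ 2 + b ^ 2 + c ^ 2 + d ^ 2 = 1.

(* pi_X(p) = pbar X p (purely imaginary for unit p; we record its Im H part) *)
Definition piX (X : R3) (p : R4) : R3 := H_im (qmul (qmul (qconj p) (im_to_H X)) p).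

Definition nubar (C : R3) (xy : R3 * R3) : R3 :=
  (dot (fst xy) (snd xy), dot (fst xy) C, dot (snd xy) C).
Definition nu (A B C : R3) (pq : R4 * R4) : R3 :=
  nubar C (piX A (fst pq), piX B (snd pq)).

Definition S2xS2 (xy : R3 * R3) : Prop := S2 (fst xy) /\ S2 (snd xy).
Definition S3xS3 (pq : R4 * R4) : Prop := S3 (fst pq) /\ S3 (snd pq).
Definition ed33 := dprod ed3 ed3.
Definition ed44 := dprod ed4 ed4.

Definition DeltaSet (C : R3) (v : R3) : Prop := exists xy, S2xS2 xy /\ nubar C xy = v.

Definition interior3 (S : R3 -> Prop) (v : R3) : Prop :=
  exists r, 0 < r /\ forall w, ed3 v w < r -> S w.
Definition closure3 (S : R3 -> Prop) (v : R3) : Prop :=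
  forall r, 0 < r -> exists w, S w /\ ed3 v w < r.
Definition boundary3 (S : R3 -> Prop) (v : R3) : Prop := closure3 S v /\ ~ interior3 S v.

Definition Vset (v : R3) : Prop :=
  v = (1, 1, 1) \/ v = (1, -1, -1) \/ v = (-1, 1, -1) \/ v = (-1, -1, 1).

Definition nubar_fibre (C v : R3) (xy : R3 * R3) : Prop := S2xS2 xy /\ nubar C xy = v.
Definition nu_fibre (A B C v : R3) (pq : R4 * R4) : Prop := S3xS3 pq /\ nu A B C pq = v.

From Stdlib Require Import Reals List Lra Psatz.
Import ListNotations.
Open Scope R_scope.

(* [nubar C (x, y)] is the Gram data of [(x, y, C)], and [gram (nubar C (x, y)) = det3 x y C ^ 2];
   so [DeltaSet C] contains a neighbourhood of each point with [gram > 0], while [gram] turns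
   negative just outside each point with [gram = 0] (other than the vertices).
   After rotating [C] to [vk], a fibre of [nubar] is an orbit of the diagonal rotations about
   [vk]: a point if [x, y = +-vk], a circle if [x, y, vk] are coplanar, and otherwise two circles,
   exchanged by reflecting [y] in the plane of [x] and [vk].  Each [piX X] is a circle bundle
   whose fibre through [p] is [exp (t X) p]; lifting a chart of a [nubar]-fibre along continuous
   sections of [piX A] and [piX B] identifies the [nu]-fibre with the chart times a 2-torus. *)

Ltac destruct_coords := repeat match goal with
 | p : R4 |- _ => let a := fresh "a" in let b := fresh "b" in let c := fresh "c" in let d := fresh "d" in destruct p as [[[a b] c] d]
 | p : R3 |- _ => let a := fresh "a" in let b := fresh "b" in let c := fresh "c" in destruct p as [[a b] c]
 | p : R2 |- _ => let a := fresh "a" in let b := fresh "b" in destruct p as [a b]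
 | p : prod _ _ |- _ => destruct p
 end.
Ltac split_coords := repeat match goal with |- (_,_) = (_,_) => f_equal end.
Ltac unfold_quat := unfold piX, qmul, qconj, im_to_H, H_im, dot, nubar, vscale, vadd, vopp, vzero in *; simpl in *.

(** * Quaternions and the Hopf maps *)

Definition qnorm2 (p : R4) : R := let '(a,b,c,d) := p in a^2+b^2+c^2+d^2.
Definition qadd (p q : R4) : R4 := let '(a,b,c,d) := p in let '(e,f,g,h) := q in (a+e,b+f,c+g,d+h).
Definition qscale (l : R) (p : R4) : R4 := let '(a,b,c,d) := p in (l*a,l*b,l*c,l*d).

(* [qexp A (cos t, sin t)] is [exp (t A)]. *)
Definition qexp (A : R3) (cs : R2) : R4 := let '(c,s) := cs in let '(a1,a2,a3) := A in (c, s*a1, s*a2, s*a3).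
Definition hopf_coord (A : R3) (p0 p : R4) : R2 :=
  let u := qmul p (qconj p0) in (fst (fst (fst u)), dot (H_im u) A).

Lemma S3_iff_qnorm2 p : S3 p <-> qnorm2 p = 1.
Proof. destruct_coords; unfold S3, qnorm2; tauto. Qed.

Lemma piX_mul X p q : piX X (qmul p q) = piX (piX X p) q.
Proof. destruct_coords; unfold_quat; split_coords; ring. Qed.
Lemma piX_dot u v r : dot (piX u r) (piX v r) = (qnorm2 r)^2 * dot u v.
Proof. destruct_coords; unfold_quat; unfold qnorm2; ring. Qed.
Lemma qnorm2_mul p q : qnorm2 (qmul p q) = qnorm2 p * qnorm2 q.
Proof. destruct_coords; unfold_quat; unfold qnorm2; ring. Qed.
Lemma qnorm2_conj p : qnorm2 (qconj p) = qnorm2 p.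
Proof. destruct_coords; unfold_quat; unfold qnorm2; ring. Qed.
Lemma piX_inv1 z r : piX (piX z r) (qconj r) = vscale ((qnorm2 r)^2) z.
Proof. destruct_coords; unfold_quat; unfold qnorm2; split_coords; ring. Qed.
Lemma piX_inv2 z r : piX (piX z (qconj r)) r = vscale ((qnorm2 r)^2) z.
Proof. destruct_coords; unfold_quat; unfold qnorm2; split_coords; ring. Qed.
Lemma vscale1 z : vscale 1 z = z.
Proof. destruct_coords; unfold_quat; split_coords; ring. Qed.
Lemma S3_mul p q : S3 p -> S3 q -> S3 (qmul p q).
Proof. rewrite !S3_iff_qnorm2, qnorm2_mul. intros -> ->; ring. Qed.
Lemma S3_conj p : S3 p -> S3 (qconj p).
Proof. rewrite !S3_iff_qnorm2, qnorm2_conj. auto. Qed.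
Lemma S2_piX X p : S2 X -> S3 p -> S2 (piX X p).
Proof. unfold S2; rewrite S3_iff_qnorm2; intros h1 h2. rewrite piX_dot, h1, h2; ring. Qed.

Lemma piX_piX_conj z r : S3 r -> piX (piX z r) (qconj r) = z.
Proof. intro h. apply S3_iff_qnorm2 in h. rewrite piX_inv1, h. replace (1^2) with 1 by ring. apply vscale1. Qed.
Lemma piX_conj_piX z r : S3 r -> piX (piX z (qconj r)) r = z.
Proof. intro h. apply S3_iff_qnorm2 in h. rewrite piX_inv2, h. replace (1^2) with 1 by ring. apply vscale1. Qed.
Lemma dot_piX_S3 u v r : S3 r -> dot (piX u r) (piX v r) = dot u v.
Proof. intro h. apply S3_iff_qnorm2 in h. rewrite piX_dot, h. ring. Qed.

(* A polynomial identity modulo vanishing quantities [e_i], checked by [ring] on an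
   explicit certificate [L - R = sum m_i e_i]. *)
Lemma eq_of_lincomb1 L R m1 e1 : e1 = 0 -> L - R = m1*e1 -> L = R.
Proof. intros h1 h; rewrite h1 in h; lra. Qed.
Lemma eq_of_lincomb2 L R m1 e1 m2 e2 : e1 = 0 -> e2 = 0 -> L - R = m1*e1+m2*e2 -> L = R.
Proof. intros h1 h2 h; rewrite h1, h2 in h; lra. Qed.
Lemma eq_of_lincomb3 L R m1 e1 m2 e2 m3 e3 : e1 = 0 -> e2 = 0 -> e3 = 0 -> L - R = m1*e1+m2*e2+m3*e3 -> L = R.
Proof. intros h1 h2 h3 h; rewrite h1, h2, h3 in h; lra. Qed.
Lemma eq_of_lincomb4 L R m1 e1 m2 e2 m3 e3 m4 e4 : e1 = 0 -> e2 = 0 -> e3 = 0 -> e4 = 0 -> L - R = m1*e1+m2*e2+m3*e3+m4*e4 -> L = R.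
Proof. intros h1 h2 h3 h4 h; rewrite h1, h2, h3, h4 in h; lra. Qed.

Lemma qnorm2_qexp A c s : qnorm2 (qexp A (c,s)) = c^2 + s^2 * dot A A.
Proof. destruct_coords; unfold_quat; unfold qexp, qnorm2; ring. Qed.
Lemma piX_qexp A c s : piX A (qexp A (c,s)) = vscale (c^2 + s^2 * dot A A) A.
Proof. destruct_coords; unfold_quat; unfold qexp; split_coords; ring. Qed.
Lemma piX_vscale l z p : piX (vscale l z) p = vscale l (piX z p).
Proof. destruct_coords; unfold_quat; split_coords; ring. Qed.
Lemma mul_conj_r e p : qmul (qmul e p) (qconj p) = qscale (qnorm2 p) e.
Proof. destruct_coords; unfold_quat; unfold qscale, qnorm2; split_coords; ring. Qed.
Lemma mul_conj_l p q : qmul (qmul p (qconj q)) q = qscale (qnorm2 q) p.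
Proof. destruct_coords; unfold_quat; unfold qscale, qnorm2; split_coords; ring. Qed.
Lemma qscale1 p : qscale 1 p = p.
Proof. destruct_coords; unfold qscale; split_coords; ring. Qed.

Lemma hopf_fibre_qexp A p0 cs : S2 A -> S3 p0 -> circle cs ->
  S3 (qmul (qexp A cs) p0) /\ piX A (qmul (qexp A cs) p0) = piX A p0 /\ hopf_coord A p0 (qmul (qexp A cs) p0) = cs.
Proof.
  intros hA hp hcs. destruct cs as [c s]. unfold circle in hcs. unfold S2 in hA.
  split; [|split].
  - apply S3_mul; auto. apply S3_iff_qnorm2. rewrite qnorm2_qexp, hA. lra.
  - rewrite piX_mul, piX_qexp, hA, piX_vscale. replace (c^2+s^2*1) with 1 by lra. apply vscale1.
  - unfold hopf_coord. rewrite mul_conj_r. apply S3_iff_qnorm2 in hp. rewrite hp, qscale1.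
    destruct_coords; unfold qexp, H_im, dot in *; simpl. f_equal.
    match goal with h : ?e = 1 |- _ => apply (eq_of_lincomb1 _ _ s (e - 1)); [lra|ring] end.
Qed.

Lemma im_to_H_piX X u : im_to_H (piX X u) = qmul (qmul (qconj u) (im_to_H X)) u.
Proof. destruct_coords; unfold_quat; split_coords; ring. Qed.
Lemma mul_sandwich u Xq : qmul u (qmul (qmul (qconj u) Xq) u) = qscale (qnorm2 u) (qmul Xq u).
Proof. destruct_coords; unfold_quat; unfold qscale, qnorm2; split_coords; ring. Qed.

Lemma commute_im_unit_qexp u A : S2 A -> qnorm2 u = 1 -> qmul u (im_to_H A) = qmul (im_to_H A) u ->
  circle (fst (fst (fst u)), dot (H_im u) A) /\ u = qexp A (fst (fst (fst u)), dot (H_im u) A).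
Proof.
  destruct u as [[[u0 w1] w2] w3]; destruct A as [[a1 a2] a3].
  unfold S2; unfold_quat; unfold qnorm2, qexp, circle in *; intros hA hu E.
  injection E; intros e4 e3 e2 _.
  assert (n1 : w2*a3 - w3*a2 = 0) by lra.
  assert (n2 : w3*a1 - w1*a3 = 0) by lra.
  assert (n3 : w1*a2 - w2*a1 = 0) by lra.
  set (t := w1*a1+w2*a2+w3*a3).
  assert (eb : w1 = t*a1).
  { apply (eq_of_lincomb3 _ _ (-w1) (a1*a1+a2*a2+a3*a3 - 1) a2 (w1*a2 - w2*a1) (-a3) (w3*a1 - w1*a3)); [lra|lra|lra|unfold t; ring]. }
  assert (ec : w2 = t*a2).
  { apply (eq_of_lincomb3 _ _ (-w2) (a1*a1+a2*a2+a3*a3 - 1) (-a1) (w1*a2 - w2*a1) a3 (w2*a3 - w3*a2)); [lra|lra|lra|unfold t; ring]. }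
  assert (ed : w3 = t*a3).
  { apply (eq_of_lincomb3 _ _ (-w3) (a1*a1+a2*a2+a3*a3 - 1) a1 (w3*a1 - w1*a3) (-a2) (w2*a3 - w3*a2)); [lra|lra|lra|unfold t; ring]. }
  split.
  - rewrite eb, ec, ed in hu.
    apply (eq_of_lincomb2 _ _ 1 (u0^2 + (t*a1)^2 + (t*a2)^2 + (t*a3)^2 - 1) (-t^2) (a1*a1+a2*a2+a3*a3 - 1)); [lra|lra|ring].
  - split_coords; auto.
Qed.

Lemma hopf_fibre_param A p0 p : S2 A -> S3 p0 -> S3 p -> piX A p = piX A p0 ->
  circle (hopf_coord A p0 p) /\ p = qmul (qexp A (hopf_coord A p0 p)) p0.
Proof.
  intros hA h0 hp E.
  assert (q0 : qnorm2 p0 = 1) by (apply S3_iff_qnorm2; auto).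
  assert (qp : qnorm2 p = 1) by (apply S3_iff_qnorm2; auto).
  set (u := qmul p (qconj p0)).
  assert (pu : p = qmul u p0) by (unfold u; rewrite mul_conj_l, q0, qscale1; auto).
  assert (hu : piX A u = A) by (unfold u; rewrite piX_mul, E, piX_inv1, q0; replace (1^2) with 1 by ring; apply vscale1).
  assert (qnu : qnorm2 u = 1) by (unfold u; rewrite qnorm2_mul, qnorm2_conj, q0, qp; ring).
  assert (Ec : qmul u (im_to_H A) = qmul (im_to_H A) u).
  { pose proof (mul_sandwich u (im_to_H A)) as M. rewrite <- im_to_H_piX, hu, qnu, qscale1 in M. exact M. }
  destruct (commute_im_unit_qexp u A hA qnu Ec) as [c1 c2].
  change (hopf_coord A p0 p) with (fst (fst (fst u)), dot (H_im u) A).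
  split; auto. rewrite <- c2. exact pu.
Qed.

Lemma piX_qscale l X p : piX X (qscale l p) = vscale (l^2) (piX X p).
Proof. destruct_coords; unfold_quat; unfold qscale; split_coords; ring. Qed.
Lemma qnorm2_qscale l p : qnorm2 (qscale l p) = l^2 * qnorm2 p.
Proof. destruct_coords; unfold qscale, qnorm2; ring. Qed.

Lemma dot_S2_bounds x y : S2 x -> S2 y -> -1 <= dot x y <= 1.
Proof. unfold S2; destruct x as [[x1 x2] x3]; destruct y as [[y1 y2] y3]; unfold_quat; intros.
  assert (0 <= (x1-y1)^2+(x2-y2)^2+(x3-y3)^2) by (apply Rplus_le_le_0_compat; [apply Rplus_le_le_0_compat|]; apply pow2_ge_0).
  assert (0 <= (x1+y1)^2+(x2+y2)^2+(x3+y3)^2) by (apply Rplus_le_le_0_compat; [apply Rplus_le_le_0_compat|]; apply pow2_ge_0).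
  split; nra. Qed.

(* The quaternion [1 - A z], with [piX A (1 - A z) = 2 (1 + A.z) z] for unit [A], [z]. *)
Definition hopf_preimage (A z : R3) : R4 :=
  let '(a1,a2,a3) := A in let '(z1,z2,z3) := z in
  (1 + (a1*z1+a2*z2+a3*z3), -(a2*z3-a3*z2), -(a3*z1-a1*z3), -(a1*z2-a2*z1)).
Lemma piX_hopf_preimage A z : piX A (hopf_preimage A z) =
  vadd (vscale (1 - dot A A * dot z z) A) (vscale (2 * dot A A * (1 + dot A z)) z).
Proof. destruct_coords; unfold_quat; unfold hopf_preimage; split_coords; ring. Qed.
Lemma qnorm2_hopf_preimage A z : qnorm2 (hopf_preimage A z) = 1 + 2 * dot A z + dot A A * dot z z.
Proof. destruct_coords; unfold_quat; unfold hopf_preimage, qnorm2; ring. Qed.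
Lemma vscale_vscale a b z : vscale a (vscale b z) = vscale (a*b) z.
Proof. destruct_coords; unfold_quat; split_coords; ring. Qed.
Lemma vadd_vscale0 A z : vadd (vscale 0 A) z = z.
Proof. destruct_coords; unfold_quat; split_coords; ring. Qed.

Lemma piX_im_to_H A e : piX A (im_to_H e) = vadd (vscale (2 * dot e A) e) (vscale (- dot e e) A).
Proof. destruct_coords; unfold_quat; split_coords; ring. Qed.

Lemma S2_orthogonal_exists A : S2 A -> exists e, S2 e /\ dot e A = 0.
Proof.
  destruct A as [[a1 a2] a3]; unfold S2; unfold_quat; intro h.
  destruct (Req_dec (a2^2+a3^2) 0) as [z|nz].
  - exists (0,1,0). unfold_quat. assert (a2 = 0) by nra. subst. split; ring.
  - assert (0 < a2^2+a3^2) by (assert (0 <= a2^2) by apply pow2_ge_0; assert (0 <= a3^2) by apply pow2_ge_0; lra).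
    set (n := sqrt (a2^2+a3^2)).
    assert (n2 : n*n = a2^2+a3^2) by (apply sqrt_sqrt; lra).
    assert (np : 0 < n) by (apply sqrt_lt_R0; lra).
    exists (0, -a3/n, a2/n). unfold_quat. split.
    + transitivity ((a2^2+a3^2)/(n*n)); [field; lra|]. rewrite n2. field. lra.
    + field. lra.
Qed.

Lemma piX_surj A z : S2 A -> S2 z -> exists p, S3 p /\ piX A p = z.
Proof.
  intros hA hz. pose proof (dot_S2_bounds A z hA hz) as [cs1 cs2].
  destruct (Rle_lt_or_eq_dec _ _ cs1) as [lt|eq].
  - set (t := 1 + dot A z).
    assert (tp : 0 < t) by (unfold t; lra).
    set (l := / sqrt (2*t)).
    assert (l2 : l^2 = / (2*t)).
    { unfold l. rewrite pow_inv. f_equal. simpl. rewrite Rmult_1_r. apply sqrt_sqrt. lra. }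
    exists (qscale l (hopf_preimage A z)). unfold S2 in *. split.
    + apply S3_iff_qnorm2. rewrite qnorm2_qscale, l2, qnorm2_hopf_preimage, hA, hz. unfold t in *. field. lra.
    + rewrite piX_qscale, l2, piX_hopf_preimage, hA, hz. unfold t in *.
      replace (1 - 1*1) with 0 by ring. rewrite vadd_vscale0, vscale_vscale.
      replace (/ (2*(1+dot A z)) * (2*1*(1+dot A z))) with 1 by (field; lra). apply vscale1.
  - destruct (S2_orthogonal_exists A hA) as [e [he eA]].
    exists (im_to_H e). split.
    + destruct e as [[e1 e2] e3]; unfold S2 in he; unfold_quat; unfold S3. lra.
    + rewrite piX_im_to_H, eA, he.
      assert (zA : z = vopp A).
      { destruct A as [[a1 a2] a3]; destruct z as [[z1 z2] z3]; unfold S2 in *; unfold_quat.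
        assert (q : (z1+a1)^2+(z2+a2)^2+(z3+a3)^2 = 0) by nra.
        assert (0 <= (z1+a1)^2) by apply pow2_ge_0.
        assert (0 <= (z2+a2)^2) by apply pow2_ge_0.
        assert (0 <= (z3+a3)^2) by apply pow2_ge_0.
        assert ((z1+a1)^2 = 0) by lra. assert ((z2+a2)^2 = 0) by lra. assert ((z3+a3)^2 = 0) by lra.
        split_coords; nra. }
      rewrite zA. destruct_coords; unfold_quat; split_coords; ring.
Qed.

Definition vk : R3 := (0,0,1).
Definition qk : R4 := (0,0,0,1).
Lemma S2_vk : S2 vk.
Proof. unfold S2, vk, dot; simpl; ring. Qed.
Definition rotz (cs : R2) (z : R3) : R3 :=
  let '(c,s) := cs in let '(z1,z2,z3) := z in (c*z1 - s*z2, s*z1 + c*z2, z3).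

(* [rot_lift A p0 (cos t, sin t) = exp (t A / 2) p0 exp (- t k / 2)], written without
   half angles so that it is polynomial in [(cos t, sin t)]. *)
Definition rot_lift (A : R3) (p0 : R4) (cs : R2) : R4 :=
  let '(c,s) := cs in
  let Ap := qmul (im_to_H A) p0 in
  qadd (qadd (qscale ((1+c)/2) p0) (qscale ((c-1)/2) (qmul Ap qk)))
       (qscale (s/2) (qadd Ap (qscale (-1) (qmul p0 qk)))).

Lemma circle_half_angle c s : c^2+s^2 = 1 -> exists h g, h^2+g^2 = 1 /\ c = h^2-g^2 /\ s = 2*h*g.
Proof.
  intro H. destruct (Req_dec c (-1)) as [e|ne].
  - exists 0, 1. subst. assert (s = 0) by nra. subst. repeat split; ring.
  - assert (cp : -1 < c) by (assert (c^2 <= 1) by (assert (0 <= s^2) by apply pow2_ge_0; lra); nra).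
    set (h := sqrt ((1+c)/2)).
    assert (h2 : h*h = (1+c)/2) by (apply sqrt_sqrt; lra).
    assert (hp : 0 < h) by (apply sqrt_lt_R0; lra).
    exists h, (s/(2*h)). 
    assert (e1 : (s/(2*h))^2 = (1-c)/2).
    { transitivity (s^2/(4*(h*h))); [field; lra|]. rewrite h2. replace (s^2) with (1-c^2) by lra. field. lra. }
    repeat split.
    + rewrite e1. replace (h^2) with (h*h) by ring. rewrite h2. field.
    + rewrite e1. replace (h^2) with (h*h) by ring. rewrite h2. field.
    + field. lra.
Qed.

Lemma rot_lift_eq A p0 h g : h^2+g^2 = 1 ->
  rot_lift A p0 (h^2-g^2, 2*h*g) = qmul (qmul (qexp A (h,g)) p0) (h,0,0,-g).
Proof. intro H. unfold rot_lift. rewrite <- H. destruct_coords; unfold qexp, qadd, qscale, qk; unfold_quat. split_coords; field. Qed.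

Lemma piX_rotz_quat z h g : piX z (h,0,0,-g) = let '(z1,z2,z3) := z in
  ((h^2-g^2)*z1 - 2*h*g*z2, 2*h*g*z1 + (h^2-g^2)*z2, (h^2+g^2)*z3).
Proof. destruct_coords; unfold_quat; split_coords; ring. Qed.

Lemma rot_lift_spec A p0 cs : S2 A -> S3 p0 -> circle cs ->
  S3 (rot_lift A p0 cs) /\ piX A (rot_lift A p0 cs) = rotz cs (piX A p0).
Proof.
  intros hA hp hcs. destruct cs as [c s]. unfold circle in hcs.
  destruct (circle_half_angle c s hcs) as [h [g [hg [ec es]]]]. subst c s.
  rewrite rot_lift_eq by auto. split.
  - apply S3_iff_qnorm2. rewrite !qnorm2_mul, qnorm2_qexp. unfold S2 in hA. rewrite hA. apply S3_iff_qnorm2 in hp. rewrite hp.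
    unfold qnorm2. replace (h^2+0^2+0^2+(-g)^2) with (h^2+g^2) by ring. rewrite hg. nra.
  - rewrite !piX_mul, piX_qexp. unfold S2 in hA. rewrite hA. replace (h^2+g^2*1) with 1 by lra.
    rewrite vscale1, piX_rotz_quat. destruct (piX A p0) as [[z1 z2] z3]. unfold rotz. rewrite hg. split_coords; ring.
Qed.

(** * Continuity on subspaces *)

Definition nonnegd {X} (d : X -> X -> R) := forall a b, 0 <= d a b.
Lemma nonneg_edR : nonnegd edR.
Proof. intros a b; apply Rabs_pos. Qed.
Lemma nonneg_dprod {X Y} (dX : X -> X -> R) (dY : Y -> Y -> R) : nonnegd (dprod dX dY).
Proof. intros a b; apply sqrt_pos. Qed.

Lemma dprod_fst_le {X Y} (dX : X -> X -> R) (dY : Y -> Y -> R) p q : dX (fst p) (fst q) <= dprod dX dY p q.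
Proof.
  unfold dprod. apply Rle_trans with (Rabs (dX (fst p) (fst q))); [apply Rle_abs|].
  rewrite <- (sqrt_pow2 (Rabs _)) by apply Rabs_pos. rewrite pow2_abs.
  apply sqrt_le_1_alt. assert (0 <= dY (snd p) (snd q) ^2) by apply pow2_ge_0. lra.
Qed.
Lemma dprod_snd_le {X Y} (dX : X -> X -> R) (dY : Y -> Y -> R) p q : dY (snd p) (snd q) <= dprod dX dY p q.
Proof.
  unfold dprod. apply Rle_trans with (Rabs (dY (snd p) (snd q))); [apply Rle_abs|].
  rewrite <- (sqrt_pow2 (Rabs _)) by apply Rabs_pos. rewrite pow2_abs.
  apply sqrt_le_1_alt. assert (0 <= dX (fst p) (fst q) ^2) by apply pow2_ge_0. lra.
Qed.
Lemma dprod_small {X Y} (dX : X -> X -> R) (dY : Y -> Y -> R) p q e : nonnegd dX -> nonnegd dY -> 0 < e ->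
  dX (fst p) (fst q) < e/2 -> dY (snd p) (snd q) < e/2 -> dprod dX dY p q < e.
Proof.
  intros nX nY he h1 h2. unfold dprod. rewrite <- (sqrt_pow2 e) by lra.
  apply sqrt_lt_1_alt. pose proof (nX (fst p) (fst q)). pose proof (nY (snd p) (snd q)). split; nra.
Qed.

Lemma cont_ext {X Y} (dX : X -> X -> R) (dY : Y -> Y -> R) S f g :
  cont_on dX dY S f -> (forall x, S x -> f x = g x) -> cont_on dX dY S g.
Proof.
  intros hf e x hx eps he. destruct (hf x hx eps he) as [d [hd H]]. exists d; split; auto.
  intros x' hx' hxx. rewrite <- !e by auto. auto.
Qed.
Lemma cont_sub {X Y} (dX : X -> X -> R) (dY : Y -> Y -> R) (S S' : X -> Prop) f :
  cont_on dX dY S f -> (forall x, S' x -> S x) -> cont_on dX dY S' f.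
Proof.
  intros hf e x hx eps he. destruct (hf x (e x hx) eps he) as [d [hd H]]. exists d; split; auto.
Qed.
Lemma cont_comp {X Y Z} (dX : X -> X -> R) (dY : Y -> Y -> R) (dZ : Z -> Z -> R) S T (f : X -> Y) (g : Y -> Z) :
  cont_on dX dY S f -> (forall x, S x -> T (f x)) -> cont_on dY dZ T g -> cont_on dX dZ S (fun x => g (f x)).
Proof.
  intros hf hST hg x hx eps he. destruct (hg (f x) (hST x hx) eps he) as [d1 [hd1 near1]].
  destruct (hf x hx d1 hd1) as [d2 [hd2 near2]]. exists d2; split; auto.
Qed.
Lemma cont_id {X} (dX : X -> X -> R) S : cont_on dX dX S (fun x => x).
Proof. intros x hx eps he. exists eps; split; auto. Qed.
Lemma cont_fst_of {X Y Z} (dX : X -> X -> R) (dY : Y -> Y -> R) (dZ : Z -> Z -> R) S h :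
  cont_on dX (dprod dY dZ) S h -> cont_on dX dY S (fun x => fst (h x)).
Proof.
  intros hh x hx eps he. destruct (hh x hx eps he) as [d [hd H]]. exists d; split; auto.
  intros x' hx' hxx. eapply Rle_lt_trans; [apply dprod_fst_le|]. eauto.
Qed.
Lemma cont_snd_of {X Y Z} (dX : X -> X -> R) (dY : Y -> Y -> R) (dZ : Z -> Z -> R) S h :
  cont_on dX (dprod dY dZ) S h -> cont_on dX dZ S (fun x => snd (h x)).
Proof.
  intros hh x hx eps he. destruct (hh x hx eps he) as [d [hd H]]. exists d; split; auto.
  intros x' hx' hxx. eapply Rle_lt_trans; [apply dprod_snd_le|]. eauto.
Qed.
Lemma cont_pair {X Y Z} (dX : X -> X -> R) (dY : Y -> Y -> R) (dZ : Z -> Z -> R) S f g :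
  nonnegd dY -> nonnegd dZ -> cont_on dX dY S f -> cont_on dX dZ S g -> cont_on dX (dprod dY dZ) S (fun x => (f x, g x)).
Proof.
  intros nY nZ hf hg x hx eps he.
  destruct (hf x hx (eps/2) ltac:(lra)) as [d1 [hd1 near1]].
  destruct (hg x hx (eps/2) ltac:(lra)) as [d2 [hd2 near2]].
  exists (Rmin d1 d2); split; [apply Rmin_glb_lt; auto|].
  intros x' hx' hxx. apply dprod_small; auto; simpl.
  - apply near1; auto. eapply Rlt_le_trans; [exact hxx| apply Rmin_l].
  - apply near2; auto. eapply Rlt_le_trans; [exact hxx| apply Rmin_r].
Qed.
Lemma cont_const {X} (dX : X -> X -> R) S (c : R) : cont_on dX edR S (fun _ => c).
Proof. intros x hx eps he. exists 1; split; [lra|]. intros. unfold edR. rewrite Rminus_diag, Rabs_R0. auto. Qed.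
Lemma cont_plus {X} (dX : X -> X -> R) S f g :
  cont_on dX edR S f -> cont_on dX edR S g -> cont_on dX edR S (fun x => f x + g x).
Proof.
  intros hf hg x hx eps he.
  destruct (hf x hx (eps/2) ltac:(lra)) as [d1 [hd1 near1]].
  destruct (hg x hx (eps/2) ltac:(lra)) as [d2 [hd2 near2]].
  exists (Rmin d1 d2); split; [apply Rmin_glb_lt; auto|].
  intros x' hx' hxx. unfold edR in *.
  assert (a1 := near1 x' hx' (Rlt_le_trans _ _ _ hxx (Rmin_l _ _))).
  assert (a2 := near2 x' hx' (Rlt_le_trans _ _ _ hxx (Rmin_r _ _))).
  replace (f x + g x - (f x' + g x')) with ((f x - f x') + (g x - g x')) by ring.
  eapply Rle_lt_trans; [apply Rabs_triang|]. lra.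
Qed.
Lemma cont_opp {X} (dX : X -> X -> R) S f :
  cont_on dX edR S f -> cont_on dX edR S (fun x => - f x).
Proof.
  intros hf x hx eps he. destruct (hf x hx eps he) as [d [hd H]]. exists d; split; auto.
  intros x' hx' hxx. unfold edR in *. replace (- f x - - f x') with (- (f x - f x')) by ring.
  rewrite Rabs_Ropp. auto.
Qed.
Lemma cont_minus {X} (dX : X -> X -> R) S f g :
  cont_on dX edR S f -> cont_on dX edR S g -> cont_on dX edR S (fun x => f x - g x).
Proof. intros hf hg. apply (cont_plus _ _ f (fun x => - g x)); auto. apply cont_opp; auto. Qed.
Lemma cont_mult {X} (dX : X -> X -> R) S f g :
  cont_on dX edR S f -> cont_on dX edR S g -> cont_on dX edR S (fun x => f x * g x).
Proof.
  intros hf hg x hx eps he.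
  set (A := Rabs (f x)). set (B := Rabs (g x)).
  assert (hA : 0 <= A) by apply Rabs_pos. assert (hB : 0 <= B) by apply Rabs_pos.
  set (e1 := Rmin 1 (eps / (2*(B+1)))). set (e2 := eps/(2*(A+1))).
  assert (he1 : 0 < e1) by (apply Rmin_glb_lt; [lra| apply Rdiv_lt_0_compat; lra]).
  assert (he2 : 0 < e2) by (apply Rdiv_lt_0_compat; lra).
  destruct (hf x hx e1 he1) as [d1 [hd1 near1]].
  destruct (hg x hx e2 he2) as [d2 [hd2 near2]].
  exists (Rmin d1 d2); split; [apply Rmin_glb_lt; auto|].
  intros x' hx' hxx. unfold edR in *.
  assert (a1 := near1 x' hx' (Rlt_le_trans _ _ _ hxx (Rmin_l _ _))).
  assert (a2 := near2 x' hx' (Rlt_le_trans _ _ _ hxx (Rmin_r _ _))).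
  assert (e11 : e1 <= 1) by apply Rmin_l.
  assert (e12 : e1 <= eps / (2*(B+1))) by apply Rmin_r.
  assert (bf : Rabs (f x') <= A + 1).
  { replace (f x') with (f x - (f x - f x')) by ring. eapply Rle_trans; [apply Rabs_triang|].
    rewrite Rabs_Ropp. unfold A. lra. }
  replace (f x * g x - f x' * g x') with (f x' * (g x - g x') + g x * (f x - f x')) by ring.
  eapply Rle_lt_trans; [apply Rabs_triang|]. rewrite !Rabs_mult.
  assert (t1 : Rabs (f x') * Rabs (g x - g x') <= (A+1) * e2).
  { apply Rmult_le_compat; try apply Rabs_pos; lra. }
  assert (t2 : Rabs (g x) * Rabs (f x - f x') <= B * e1).
  { apply Rmult_le_compat; try apply Rabs_pos; fold B; lra. }
  assert (t3 : (A+1)*e2 = eps/2) by (unfold e2; field; lra).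
  assert (t4 : B * e1 < eps/2).
  { apply Rle_lt_trans with (B * (eps / (2*(B+1)))). apply Rmult_le_compat_l; lra.
    apply (Rmult_lt_reg_l (2*(B+1))); [lra|]. field_simplify; lra. }
  lra.
Qed.

Ltac unfold_metrics := unfold ed44, ed33, ed4, ed3, ed2, d_torus3, d_torus2, d_two_circles, d_two_torus3 in *.
Ltac nn := first [apply nonneg_dprod | apply nonneg_edR].
Ltac cont_step :=
  match goal with
  | |- cont_on _ _ _ (fun x => (@?f x, @?g x)) => apply (cont_pair _ _ _ _ f g); [nn|nn| |]
  | |- cont_on _ edR _ (fun _ => ?c) => apply cont_const
  | |- cont_on _ edR _ (fun x => @?f x + @?g x) => apply (cont_plus _ _ f g)
  | |- cont_on _ edR _ (fun x => @?f x - @?g x) => apply (cont_minus _ _ f g)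
  | |- cont_on _ edR _ (fun x => @?f x * @?g x) => apply (cont_mult _ _ f g)
  | |- cont_on _ edR _ (fun x => - @?f x) => apply (cont_opp _ _ f)
  | |- cont_on _ _ _ (fun x => x) => apply cont_id
  | |- cont_on _ _ _ (fun x => fst (@?h x)) => eapply (cont_fst_of _ _ _ _ h)
  | |- cont_on _ _ _ (fun x => snd (@?h x)) => eapply (cont_snd_of _ _ _ _ h)
  | |- cont_on _ _ _ _ => eassumption
  end.
Ltac cont_tac := unfold_metrics; unfold Rdiv; repeat cont_step.

(* Eta-expanded tuples, so that [cont_tac] sees coordinates as projections. *)
Definition eta4 (p : R4) : R4 := (fst (fst (fst p)), snd (fst (fst p)), snd (fst p), snd p).
Definition eta3 (p : R3) : R3 := (fst (fst p), snd (fst p), snd p).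
Lemma eta4_id p : eta4 p = p. Proof. destruct p as [[[? ?] ?] ?]; reflexivity. Qed.
Lemma eta3_id p : eta3 p = p. Proof. destruct p as [[? ?] ?]; reflexivity. Qed.
Definition eta2 (p : R2) : R2 := (fst p, snd p).
Lemma eta2_id p : eta2 p = p. Proof. destruct p; reflexivity. Qed.

Lemma cont_fst_id {X Y} (dX : X -> X -> R) (dY : Y -> Y -> R) S : cont_on (dprod dX dY) dX S (fun x => fst x).
Proof. apply (cont_fst_of _ _ dY _ (fun x => x)). apply cont_id. Qed.
Lemma cont_snd_id {X Y} (dX : X -> X -> R) (dY : Y -> Y -> R) S : cont_on (dprod dX dY) dY S (fun x => snd x).
Proof. apply (cont_snd_of _ dX _ _ (fun x => x)). apply cont_id. Qed.
Lemma cont_fstfst {X Y Z} (dX : X -> X -> R) (dY : Y -> Y -> R) (dZ : Z -> Z -> R) S : cont_on (dprod (dprod dX dY) dZ) dX S (fun x => fst (fst x)).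
Proof. apply (cont_fst_of _ _ dY _ (fun x => fst x)). apply cont_fst_id. Qed.
Lemma cont_sndfst {X Y Z} (dX : X -> X -> R) (dY : Y -> Y -> R) (dZ : Z -> Z -> R) S : cont_on (dprod (dprod dX dY) dZ) dY S (fun x => snd (fst x)).
Proof. apply (cont_snd_of _ dX _ _ (fun x => fst x)). apply cont_fst_id. Qed.

Section QuaternionContinuity.
Context {X : Type} (dX : X -> X -> R) (S : X -> Prop).

Lemma cont_qmul f1 f2 : cont_on dX ed4 S f1 -> cont_on dX ed4 S f2 -> cont_on dX ed4 S (fun x => qmul (f1 x) (f2 x)).
Proof.
  intros. apply (cont_ext _ _ _ (fun x => qmul (eta4 (f1 x)) (eta4 (f2 x)))); [|intros; rewrite !eta4_id; auto].
  unfold qmul, eta4; simpl. cont_tac.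
Qed.
Lemma cont_piX Y f : cont_on dX ed4 S f -> cont_on dX ed3 S (fun x => piX Y (f x)).
Proof.
  intros. apply (cont_ext _ _ _ (fun x => piX Y (eta4 (f x)))); [|intros; rewrite !eta4_id; auto].
  destruct Y as [[y1 y2] y3]. unfold piX, qmul, qconj, im_to_H, H_im, eta4; simpl. cont_tac.
Qed.
Lemma cont_piX_vec r f : cont_on dX ed3 S f -> cont_on dX ed3 S (fun x => piX (f x) r).
Proof.
  intros. apply (cont_ext _ _ _ (fun x => piX (eta3 (f x)) r)); [|intros; rewrite !eta3_id; auto].
  destruct r as [[[r1 r2] r3] r4]. unfold piX, qmul, qconj, im_to_H, H_im, eta3; simpl. cont_tac.
Qed.
Lemma cont_qexp A f : cont_on dX ed2 S f -> cont_on dX ed4 S (fun x => qexp A (f x)).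
Proof.
  intros. apply (cont_ext _ _ _ (fun x => qexp A (eta2 (f x)))); [|intros; rewrite !eta2_id; auto].
  destruct A as [[a1 a2] a3]. unfold qexp, eta2; simpl. cont_tac.
Qed.
Lemma cont_hopf_coord A f1 f2 : cont_on dX ed4 S f1 -> cont_on dX ed4 S f2 -> cont_on dX ed2 S (fun x => hopf_coord A (f1 x) (f2 x)).
Proof.
  intros. apply (cont_ext _ _ _ (fun x => hopf_coord A (eta4 (f1 x)) (eta4 (f2 x)))); [|intros; rewrite !eta4_id; auto].
  destruct A as [[a1 a2] a3]. unfold hopf_coord, qmul, qconj, H_im, dot, eta4; simpl. cont_tac.
Qed.
Lemma cont_rot_lift A f1 f2 : cont_on dX ed4 S f1 -> cont_on dX ed2 S f2 -> cont_on dX ed4 S (fun x => rot_lift A (f1 x) (f2 x)).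
Proof.
  intros. apply (cont_ext _ _ _ (fun x => rot_lift A (eta4 (f1 x)) (eta2 (f2 x)))); [|intros; rewrite eta4_id, eta2_id; auto].
  destruct A as [[a1 a2] a3]. unfold rot_lift, qadd, qscale, qk, qmul, im_to_H, eta4, eta2; simpl. cont_tac.
Qed.
Lemma cont_rotz f g : cont_on dX ed2 S f -> cont_on dX ed3 S g -> cont_on dX ed3 S (fun x => rotz (f x) (g x)).
Proof.
  intros. apply (cont_ext _ _ _ (fun x => rotz (eta2 (f x)) (eta3 (g x)))); [|intros; rewrite eta2_id, eta3_id; auto].
  unfold rotz, eta2, eta3; simpl. cont_tac.
Qed.
Lemma cont_qadd f1 f2 : cont_on dX ed4 S f1 -> cont_on dX ed4 S f2 -> cont_on dX ed4 S (fun x => qadd (f1 x) (f2 x)).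
Proof.
  intros. apply (cont_ext _ _ _ (fun x => qadd (eta4 (f1 x)) (eta4 (f2 x)))); [|intros; rewrite !eta4_id; auto].
  unfold qadd, eta4; simpl. cont_tac.
Qed.
Lemma cont_qscale f1 f2 : cont_on dX edR S f1 -> cont_on dX ed4 S f2 -> cont_on dX ed4 S (fun x => qscale (f1 x) (f2 x)).
Proof.
  intros. apply (cont_ext _ _ _ (fun x => qscale (f1 x) (eta4 (f2 x)))); [|intros; rewrite !eta4_id; auto].
  unfold qscale, eta4; simpl. cont_tac.
Qed.
Lemma cont_const4 (c : R4) : cont_on dX ed4 S (fun _ => c).
Proof. destruct c as [[[a b] c] d]. cont_tac. Qed.
Lemma cont_const3 (c : R3) : cont_on dX ed3 S (fun _ => c).
Proof. destruct c as [[a b] c]. cont_tac. Qed.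
End QuaternionContinuity.

(** * Lifting fibres through the Hopf maps *)

Definition fibre_chart {Xt} (dT : Xt->Xt->R) (T : Xt -> Prop) (F : R3*R3 -> Prop) (f : Xt -> R3*R3) (g : R3*R3 -> Xt) :=
 (forall t, T t -> F (f t)) /\ (forall z, F z -> T (g z)) /\ (forall t, T t -> g (f t) = t) /\
 (forall z, F z -> f (g z) = z) /\ cont_on dT ed33 T f /\ cont_on ed33 dT F g.
Definition hopf_sections {Xt} (dT : Xt->Xt->R) (T : Xt -> Prop) (A B : R3) (f : Xt -> R3*R3) (sA sB : Xt -> R4) :=
 (forall t, T t -> S3 (sA t) /\ S3 (sB t) /\ piX A (sA t) = fst (f t) /\ piX B (sB t) = snd (f t)) /\
 cont_on dT ed4 T sA /\ cont_on dT ed4 T sB.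

Lemma homeo_trans {X Y Z} (dX : X -> X -> R) (dY : Y -> Y -> R) (dZ : Z -> Z -> R) S T U :
  homeomorphic dX dY S T -> homeomorphic dY dZ T U -> homeomorphic dX dZ S U.
Proof.
  intros [f [g [h1 [h2 [h3 [h4 [h5 h6]]]]]]] [f' [g' [k1 [k2 [k3 [k4 [k5 k6]]]]]]].
  exists (fun x => f' (f x)), (fun z => g (g' z)). repeat split; intros.
  - auto.
  - auto.
  - rewrite k3; auto.
  - rewrite h4; auto.
  - eapply cont_comp; eauto.
  - eapply cont_comp; eauto.
Qed.

Section HopfLift.
Variables (Xt : Type) (dT : Xt -> Xt -> R) (T : Xt -> Prop) (A B : R3) (F : R3*R3 -> Prop).
Variables (f : Xt -> R3*R3) (g : R3*R3 -> Xt) (sA sB : Xt -> R4).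
Hypotheses (hA : S2 A) (hB : S2 B) (ndT : nonnegd dT).
Hypotheses (chart : fibre_chart dT T F f g) (sections : hopf_sections dT T A B f sA sB).

Let hopfAB (pq : R4 * R4) : R3 * R3 := (piX A (fst pq), piX B (snd pq)).
Let lifted (pq : R4 * R4) : Prop := S3xS3 pq /\ F (hopfAB pq).
Let model (w : Xt * R2 * R2) : Prop := T (fst (fst w)) /\ circle (snd (fst w)) /\ circle (snd w).

(* A point of the lifted fibre is recorded by its image chart point [t] and its
   positions on the two Hopf circles through the sections [sA t], [sB t]. *)
Let lift_fwd (pq : R4 * R4) : Xt * R2 * R2 :=
  let t := g (hopfAB pq) in ((t, hopf_coord A (sA t) (fst pq)), hopf_coord B (sB t) (snd pq)).
Let lift_bwd (w : Xt * R2 * R2) : R4 * R4 :=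
  (qmul (qexp A (snd (fst w))) (sA (fst (fst w))), qmul (qexp B (snd w)) (sB (fst (fst w)))).

Lemma lifted_chart pq : lifted pq ->
  T (g (hopfAB pq)) /\ piX A (sA (g (hopfAB pq))) = piX A (fst pq) /\
  piX B (sB (g (hopfAB pq))) = piX B (snd pq).
Proof.
  destruct chart as [_ [hg [_ [hfg _]]]]. destruct sections as [hs _].
  intros [_ hF]. pose proof (hg _ hF) as hT. destruct (hs _ hT) as [_ [_ [e1 e2]]].
  rewrite hfg in e1, e2 by auto. split; auto.
Qed.

Lemma hopfAB_lift_bwd w : model w -> hopfAB (lift_bwd w) = f (fst (fst w)).
Proof.
  destruct sections as [hs _]. intros [hT [c1 c2]]. destruct (hs _ hT) as [s1 [s2 [e1 e2]]].
  destruct (hopf_fibre_qexp A _ _ hA s1 c1) as [_ [E1 _]].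
  destruct (hopf_fibre_qexp B _ _ hB s2 c2) as [_ [E2 _]].
  unfold hopfAB, lift_bwd; simpl. rewrite E1, E2, e1, e2. destruct (f (fst (fst w))); auto.
Qed.

Lemma lift_fwd_model pq : lifted pq -> model (lift_fwd pq).
Proof.
  destruct sections as [hs _]. intros hpq.
  destruct (lifted_chart pq hpq) as [hT [e1 e2]]. destruct hpq as [[h1 h2] _].
  destruct (hs _ hT) as [s1 [s2 _]]. split; [exact hT|split].
  - apply (hopf_fibre_param A _ _ hA s1 h1). auto.
  - apply (hopf_fibre_param B _ _ hB s2 h2). auto.
Qed.

Lemma lift_bwd_lifted w : model w -> lifted (lift_bwd w).
Proof.
  destruct chart as [hf _]. destruct sections as [hs _].
  intros hw. pose proof (hopfAB_lift_bwd w hw) as E. destruct hw as [hT [c1 c2]].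
  destruct (hs _ hT) as [s1 [s2 _]]. split; [split; simpl; apply hopf_fibre_qexp; auto|].
  rewrite E. apply hf. exact hT.
Qed.

Lemma lift_bwd_fwd pq : lifted pq -> lift_bwd (lift_fwd pq) = pq.
Proof.
  destruct sections as [hs _]. intros hpq.
  destruct (lifted_chart pq hpq) as [hT [e1 e2]]. destruct hpq as [[h1 h2] _].
  destruct (hs _ hT) as [s1 [s2 _]].
  destruct (hopf_fibre_param A _ _ hA s1 h1 (eq_sym e1)) as [_ E1].
  destruct (hopf_fibre_param B _ _ hB s2 h2 (eq_sym e2)) as [_ E2].
  destruct pq as [p q]. unfold lift_bwd, lift_fwd; cbn [fst snd] in *. rewrite <- E1, <- E2. auto.
Qed.

Lemma lift_fwd_bwd w : model w -> lift_fwd (lift_bwd w) = w.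
Proof.
  destruct chart as [_ [_ [hgf _]]]. destruct sections as [hs _].
  intros hw. unfold lift_fwd. rewrite hopfAB_lift_bwd, hgf by apply hw.
  destruct hw as [hT [c1 c2]]. destruct (hs _ hT) as [s1 [s2 _]].
  destruct (hopf_fibre_qexp A _ _ hA s1 c1) as [_ [_ E1]].
  destruct (hopf_fibre_qexp B _ _ hB s2 c2) as [_ [_ E2]].
  cbn [fst snd lift_bwd]. rewrite E1, E2. destruct w as [[t u] v]; auto.
Qed.

Lemma cont_lift_fwd : cont_on ed44 (dprod (dprod dT ed2) ed2) lifted lift_fwd.
Proof.
  destruct chart as [_ [hg [_ [_ [_ cg]]]]]. destruct sections as [_ [csA csB]].
  assert (cpi : cont_on ed44 ed33 lifted hopfAB).
  { unfold hopfAB, ed33. apply cont_pair; try nn; apply cont_piX; [apply cont_fst_id|apply cont_snd_id]. }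
  assert (cg' : cont_on ed44 dT lifted (fun pq => g (hopfAB pq))).
  { eapply cont_comp; [exact cpi| |exact cg]. intros x hx; apply hx. }
  assert (csA' : cont_on ed44 ed4 lifted (fun pq => sA (g (hopfAB pq)))).
  { eapply cont_comp; [exact cg'| |exact csA]. intros x hx. apply hg, hx. }
  assert (csB' : cont_on ed44 ed4 lifted (fun pq => sB (g (hopfAB pq)))).
  { eapply cont_comp; [exact cg'| |exact csB]. intros x hx. apply hg, hx. }
  unfold lift_fwd. apply cont_pair; [nn | unfold ed2; nn | | ].
  - apply cont_pair; [exact ndT | unfold ed2; nn | exact cg' | ].
    apply cont_hopf_coord; auto. apply cont_fst_id.
  - apply cont_hopf_coord; auto. apply cont_snd_id.
Qed.

Lemma cont_lift_bwd : cont_on (dprod (dprod dT ed2) ed2) ed44 model lift_bwd.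
Proof.
  destruct sections as [_ [csA csB]].
  assert (cA : cont_on (dprod (dprod dT ed2) ed2) ed4 model (fun w => sA (fst (fst w)))).
  { eapply cont_comp; [apply cont_fstfst | intros w hw; apply hw | exact csA]. }
  assert (cB : cont_on (dprod (dprod dT ed2) ed2) ed4 model (fun w => sB (fst (fst w)))).
  { eapply cont_comp; [apply cont_fstfst | intros w hw; apply hw | exact csB]. }
  unfold lift_bwd, ed44. apply cont_pair; try nn; apply cont_qmul; auto; apply cont_qexp.
  - apply cont_sndfst.
  - apply cont_snd_id.
Qed.

Lemma hopf_lift_homeo : homeomorphic ed44 (dprod (dprod dT ed2) ed2) lifted model.
Proof.
  exists lift_fwd, lift_bwd.
  split; [exact lift_fwd_model|split; [exact lift_bwd_lifted|split; [exact lift_bwd_fwd|]]].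
  split; [exact lift_fwd_bwd|split; [exact cont_lift_fwd|exact cont_lift_bwd]].
Qed.

End HopfLift.

Lemma homeo_ext {X Y} (dX : X -> X -> R) (dY : Y -> Y -> R) S T S' T' :
  (forall x, S x <-> S' x) -> (forall y, T y <-> T' y) -> homeomorphic dX dY S T -> homeomorphic dX dY S' T'.
Proof.
  intros eS eT [f [g [h1 [h2 [h3 [h4 [h5 h6]]]]]]]. exists f, g. repeat split; intros.
  - apply eT, h1, eS; auto.
  - apply eS, h2, eT; auto.
  - apply h3, eS; auto.
  - apply h4, eT; auto.
  - eapply cont_sub; [exact h5|]. intros; apply eS; auto.
  - eapply cont_sub; [exact h6|]. intros; apply eT; auto.
Qed.

Lemma homeo_of_chart {Xt} (dT : Xt -> Xt -> R) T F f g : fibre_chart dT T F f g -> homeomorphic ed33 dT F T.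
Proof. intros [h1 [h2 [h3 [h4 [h5 h6]]]]]. exists g, f. repeat split; auto. Qed.

Lemma nu_fibre_eq A B C N pq : S2 A -> S2 B ->
  (nu_fibre A B C N pq <-> S3xS3 pq /\ nubar_fibre C N (piX A (fst pq), piX B (snd pq))).
Proof.
  intros hA hB. destruct pq as [p q]. unfold nu_fibre, nubar_fibre, S2xS2, S3xS3, nu; cbn [fst snd].
  split.
  - intros [[h1 h2] e]. repeat split; auto; apply S2_piX; auto.
  - intros [[h1 h2] [_ e]]. auto.
Qed.

Lemma nu_fibre_homeo {Xt} (dT : Xt -> Xt -> R) T A B C N f g sA sB :
  S2 A -> S2 B -> nonnegd dT -> fibre_chart dT T (nubar_fibre C N) f g -> hopf_sections dT T A B f sA sB ->
  homeomorphic ed44 (dprod (dprod dT ed2) ed2) (nu_fibre A B C N)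
    (fun w => T (fst (fst w)) /\ circle (snd (fst w)) /\ circle (snd w)).
Proof.
  intros hA hB nd FD SD.
  pose proof (hopf_lift_homeo _ dT T A B (nubar_fibre C N) f g sA sB hA hB nd FD SD) as L.
  refine (homeo_ext _ _ _ _ _ _ _ _ L); [|intro; reflexivity].
  intro pq. symmetry. apply nu_fibre_eq; auto.
Qed.

(** * Fibres of [nubar vk] *)

Definition rotz_angle (u z : R3) : R2 :=
  let '(u1,u2,u3) := u in let '(z1,z2,z3) := z in
  ((u1*z1+u2*z2)/(u1^2+u2^2), (u1*z2-u2*z1)/(u1^2+u2^2)).
Definition det12 (z : R3*R3) : R :=
  let '((a1,a2,a3),(b1,b2,b3)) := z in a1*b2 - a2*b1.
(* [yflip x y 1] reflects [y] in the vertical plane through [x]: this fixes [nubar vk (x, _)]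
   and reverses the sign of [det12 (x, _)]. *)
Definition yflip (x y : R3) (k : R) : R3 :=
  let '(x1,x2,x3) := x in let '(y1,y2,y3) := y in
  let m := x1^2+x2^2 in let D := x1*y2-x2*y1 in
  (y1 + 2*k*D*x2/m, y2 - 2*k*D*x1/m, y3).

Section PlanarContinuity.
Context {X : Type} (dX : X -> X -> R) (S : X -> Prop).

Lemma cont_rotz_angle u f : cont_on dX ed3 S f -> cont_on dX ed2 S (fun x => rotz_angle u (f x)).
Proof.
  intros. apply (cont_ext _ _ _ (fun x => rotz_angle u (eta3 (f x)))); [|intros; rewrite eta3_id; auto].
  destruct u as [[u1 u2] u3]. unfold rotz_angle, eta3; simpl. cont_tac.
Qed.
Lemma cont_det12 f : cont_on dX ed33 S f -> cont_on dX edR S (fun x => det12 (f x)).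
Proof.
  intros. apply (cont_ext _ _ _ (fun x => det12 (eta3 (fst (f x)), eta3 (snd (f x))))); [|intros; rewrite !eta3_id; destruct (f x); auto].
  unfold det12, eta3; simpl. cont_tac.
Qed.
Lemma cont_yflip x y f : cont_on dX edR S f -> cont_on dX ed3 S (fun w => yflip x y (f w)).
Proof.
  intros. destruct x as [[x1 x2] x3]; destruct y as [[y1 y2] y3]. unfold yflip; simpl. cont_tac.
Qed.
End PlanarContinuity.

Definition same_rotz_orbit (x v x' y' : R3) : Prop :=
  let '(x1,x2,x3) := x in let '(v1,v2,v3) := v in let '(a1,a2,a3) := x' in let '(b1,b2,b3) := y' in
  a1^2+a2^2 = x1^2+x2^2 /\ a3 = x3 /\ b3 = v3 /\ a1*b1+a2*b2 = x1*v1+x2*v2 /\ a1*b2-a2*b1 = x1*v2-x2*v1.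

Definition planar_norm2 (x : R3) : R := let '(x1,x2,x3) := x in x1^2+x2^2.

Lemma rotz_angle_spec (x v x' y' : R3) : 0 < planar_norm2 x -> same_rotz_orbit x v x' y' -> rotz (rotz_angle x x') x = x' /\ rotz (rotz_angle x x') v = y'.
Proof.
  destruct x as [[x1 x2] x3]; destruct v as [[v1 v2] v3]; destruct x' as [[a1 a2] a3]; destruct y' as [[b1 b2] b3].
  unfold planar_norm2, same_rotz_orbit, rotz, rotz_angle; intros hm [e1 [e2 [e3 [e4 e5]]]]. subst a3 b3.
  split; split_coords; auto.
  - field. lra.
  - field. lra.
  - assert (E : (x1*a1+x2*a2)*v1 - (x1*a2-x2*a1)*v2 = b1*(x1^2+x2^2)).
    { apply (eq_of_lincomb3 _ _ b1 (a1^2+a2^2 - (x1^2+x2^2)) (-a1) (a1*b1+a2*b2 - (x1*v1+x2*v2)) a2 (a1*b2-a2*b1 - (x1*v2-x2*v1))); [lra|lra|lra|ring]. }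
    replace b1 with (b1*(x1^2+x2^2)/(x1^2+x2^2)) by (field; lra). rewrite <- E. field. lra.
  - assert (E : (x1*a2-x2*a1)*v1 + (x1*a1+x2*a2)*v2 = b2*(x1^2+x2^2)).
    { apply (eq_of_lincomb3 _ _ b2 (a1^2+a2^2 - (x1^2+x2^2)) (-a2) (a1*b1+a2*b2 - (x1*v1+x2*v2)) (-a1) (a1*b2-a2*b1 - (x1*v2-x2*v1))); [lra|lra|lra|ring]. }
    replace b2 with (b2*(x1^2+x2^2)/(x1^2+x2^2)) by (field; lra). rewrite <- E. field. lra.
Qed.

Lemma nubar_fibre_vk x y z : nubar_fibre vk (nubar vk (x,y)) z <->
  S2 (fst z) /\ S2 (snd z) /\ snd (fst z) = snd x /\ snd (snd z) = snd y /\ dot (fst z) (snd z) = dot x y.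
Proof.
  destruct z as [z1 z2]. destruct x as [[x1 x2] x3]; destruct y as [[y1 y2] y3];
  destruct z1 as [[a1 a2] a3]; destruct z2 as [[b1 b2] b3].
  unfold nubar_fibre, S2xS2, nubar, vk, dot; simpl. split.
  - intros [[h1 h2] e]. injection e; intros. repeat split; auto; lra.
  - intros [h1 [h2 [e1 [e2 e3]]]]. repeat split; auto. rewrite e3. f_equal; [f_equal|]; lra.
Qed.

Lemma same_rotz_orbit_intro (x v z1 z2 : R3) : S2 x -> S2 z1 -> snd z1 = snd x -> snd z2 = snd v -> dot z1 z2 = dot x v ->
  det12 (z1,z2) = det12 (x,v) -> same_rotz_orbit x v z1 z2.
Proof.
  destruct x as [[x1 x2] x3]; destruct v as [[v1 v2] v3];
  destruct z1 as [[a1 a2] a3]; destruct z2 as [[b1 b2] b3].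
  unfold S2, same_rotz_orbit, dot, det12; simpl. intros h1 h2 e1 e2 e3 e4. subst. repeat split; auto; lra.
Qed.

Lemma nubar_fibre_vk_det12_sqr x y z : S2 x -> S2 y -> nubar_fibre vk (nubar vk (x,y)) z -> det12 z ^2 = det12 (x,y) ^2.
Proof.
  intros hx hy hz. apply nubar_fibre_vk in hz. destruct hz as [h1 [h2 [e1 [e2 e3]]]].
  destruct z as [z1 z2]; destruct x as [[x1 x2] x3]; destruct y as [[y1 y2] y3];
  destruct z1 as [[a1 a2] a3]; destruct z2 as [[b1 b2] b3].
  unfold S2 in *; cbn [fst snd det12 dot] in *. subst.
  assert (L1 : (a1*b2-a2*b1)^2 = (a1^2+a2^2)*(b1^2+b2^2) - (a1*b1+a2*b2)^2) by ring.
  assert (L2 : (x1*y2-x2*y1)^2 = (x1^2+x2^2)*(y1^2+y2^2) - (x1*y1+x2*y2)^2) by ring.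
  rewrite L1, L2. replace (a1^2+a2^2) with (1 - x3^2) by lra. replace (b1^2+b2^2) with (1 - y3^2) by lra.
  replace (x1^2+x2^2) with (1 - x3^2) by lra. replace (y1^2+y2^2) with (1 - y3^2) by lra.
  replace (a1*b1+a2*b2) with (x1*y1+x2*y2) by lra. ring.
Qed.

Lemma rotz_S2 cs z : circle cs -> S2 z -> S2 (rotz cs z).
Proof. destruct cs as [c s]; unfold circle; destruct z as [[a b] c0]; unfold S2, rotz, dot; simpl; intros hcs h.
  apply (eq_of_lincomb2 _ _ 1 (a*a+b*b+c0*c0-1) (a^2+b^2) (c^2+s^2-1)); [lra|lra|ring]. Qed.
Lemma rotz_dot (cs : R2) (a b : R3) : circle cs -> dot (rotz cs a) (rotz cs b) = dot a b.
Proof. destruct cs as [c s]; unfold circle; destruct a as [[a0 b0] c0]; destruct b as [[a1 b1] c1]; unfold rotz, dot; simpl; intros hcs.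
  apply (eq_of_lincomb1 _ _ (a0*a1+b0*b1) (c^2+s^2-1)); [lra|ring]. Qed.
Lemma rotz_snd cs a : snd (rotz cs a) = snd a.
Proof. destruct cs as [c s]; destruct a as [[a0 b0] c0]; reflexivity. Qed.
Lemma rotz_det12 (cs : R2) (a b : R3) : circle cs -> det12 (rotz cs a, rotz cs b) = det12 (a,b).
Proof. destruct cs as [c s]; unfold circle; destruct a as [[a0 b0] c0]; destruct b as [[a1 b1] c1]; unfold rotz, det12; simpl; intros hcs.
  apply (eq_of_lincomb1 _ _ (a0*b1-b0*a1) (c^2+s^2-1)); [lra|ring]. Qed.
Lemma rotz_angle_rotz cs u : circle cs -> 0 < planar_norm2 u -> rotz_angle u (rotz cs u) = cs.
Proof. destruct cs as [c s]; unfold circle; destruct u as [[a0 b0] c0]; unfold planar_norm2, rotz_angle, rotz; cbv beta iota zeta; intros hcs h.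
  f_equal; field; lra. Qed.

Lemma rotz_angle_circle u z : 0 < planar_norm2 u -> planar_norm2 z = planar_norm2 u -> circle (rotz_angle u z).
Proof.
  destruct u as [[u1 u2] u3]; destruct z as [[z1 z2] z3]. unfold planar_norm2, rotz_angle, circle. intros h e.
  assert (L : (u1*z1+u2*z2)^2 + (u1*z2-u2*z1)^2 = (u1^2+u2^2)*(z1^2+z2^2)) by ring.
  rewrite e in L.
  transitivity (((u1*z1+u2*z2)^2 + (u1*z2-u2*z1)^2)/((u1^2+u2^2)*(u1^2+u2^2))).
  - field. lra.
  - rewrite L. field. lra.
Qed.

Lemma yflip_dot_self x y k : 0 < planar_norm2 x -> dot (yflip x y k) (yflip x y k) = dot y y + 4*k*(k-1)*(det12 (x,y))^2 / planar_norm2 x.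
Proof. intro hm. revert hm. destruct x as [[x1 x2] x3]; destruct y as [[y1 y2] y3]. unfold yflip, dot, det12, planar_norm2; cbv beta iota zeta. intro h.
  field. lra. Qed.
Lemma yflip0 x y : 0 < planar_norm2 x -> yflip x y 0 = y.
Proof. destruct x as [[x1 x2] x3]; destruct y as [[y1 y2] y3]. unfold yflip, planar_norm2; cbv beta iota zeta. intro h.
  split_coords; field; lra. Qed.
Lemma yflip_dot x y k : 0 < planar_norm2 x -> dot x (yflip x y k) = dot x y.
Proof. destruct x as [[x1 x2] x3]; destruct y as [[y1 y2] y3]. unfold yflip, dot, planar_norm2; cbv beta iota zeta. intro h.
  field. lra. Qed.
Lemma yflip_snd x y k : snd (yflip x y k) = snd y.
Proof. destruct x as [[x1 x2] x3]; destruct y as [[y1 y2] y3]. reflexivity. Qed.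
Lemma yflip_det12 x y k : 0 < planar_norm2 x -> det12 (x, yflip x y k) = (1 - 2*k) * det12 (x,y).
Proof. destruct x as [[x1 x2] x3]; destruct y as [[y1 y2] y3]. unfold yflip, det12, planar_norm2; cbv beta iota zeta. intro h.
  field. lra. Qed.
Lemma yflip_S2 x y k : 0 < planar_norm2 x -> k = 0 \/ k = 1 -> S2 y -> S2 (yflip x y k).
Proof. intros hm hk hy. unfold S2 in *. rewrite yflip_dot_self, hy by auto. destruct hk; subst; field; lra. Qed.

Lemma planar_norm2_eq a b : S2 a -> S2 b -> snd a = snd b -> planar_norm2 a = planar_norm2 b.
Proof. destruct a as [[a1 a2] a3]; destruct b as [[b1 b2] b3]; unfold S2, dot, planar_norm2; simpl. intros; subst; lra. Qed.

Lemma det12_swap (a b : R3) : det12 (b,a) = - det12 (a,b).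
Proof. destruct a as [[a1 a2] a3]; destruct b as [[b1 b2] b3]; unfold det12; simpl; ring. Qed.
Lemma dot_comm (a b : R3) : dot a b = dot b a.
Proof. destruct a as [[a1 a2] a3]; destruct b as [[b1 b2] b3]; unfold dot; simpl; ring. Qed.

Lemma planar_norm2_pos (a b : R3) : det12 (a,b) <> 0 -> 0 < planar_norm2 a.
Proof. destruct a as [[a1 a2] a3]; destruct b as [[b1 b2] b3]; unfold det12, planar_norm2; simpl. intro h.
  destruct (Req_dec (a1^2+a2^2) 0) as [e|e].
  - exfalso. apply h. assert (a1 = 0) by nra. assert (a2 = 0) by nra. subst. ring.
  - assert (0 <= a1^2) by apply pow2_ge_0. assert (0 <= a2^2) by apply pow2_ge_0. lra.
Qed.

Lemma pow2_eq0 a : a^2 = 0 -> a = 0.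
Proof. intro h. nra. Qed.
Lemma pow2_eq_cases a b : a^2 = b^2 -> a = b \/ a = -b.
Proof. intro h. assert ((a-b)*(a+b) = 0) by (ring_simplify; lra).
  destruct (Rmult_integral _ _ H); [left|right]; lra. Qed.

Lemma nubar_fibre_vk_det12_eq0 x y z : S2 x -> S2 y -> det12 (x,y) = 0 ->
  nubar_fibre vk (nubar vk (x,y)) z -> det12 z = 0.
Proof.
  intros hx hy hD hz. pose proof (nubar_fibre_vk_det12_sqr x y z hx hy hz) as e. rewrite hD in e.
  apply pow2_eq0; lra.
Qed.

Lemma chart_circle_vk x y (bx : bool) : S2 x -> S2 y -> det12 (x,y) = 0 ->
  0 < planar_norm2 (if bx then x else y) ->
  fibre_chart ed2 circle (nubar_fibre vk (nubar vk (x,y)))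
    (fun cs => (rotz cs x, rotz cs y))
    (fun z => rotz_angle (if bx then x else y) (if bx then fst z else snd z)).
Proof.
  intros hx hy hD hm.
  unfold fibre_chart; repeat match goal with |- _ /\ _ => split end.
  - intros cs hcs. apply nubar_fibre_vk. simpl. repeat split.
    + apply rotz_S2; auto. + apply rotz_S2; auto. + apply rotz_snd. + apply rotz_snd. + apply rotz_dot; auto.
  - intros z hz. apply nubar_fibre_vk in hz as [h1 [h2 [e1 [e2 e3]]]].
    apply rotz_angle_circle; auto. destruct bx; apply planar_norm2_eq; auto.
  - intros cs hcs. destruct bx; apply rotz_angle_rotz; auto.
  - intros z hz. pose proof (nubar_fibre_vk_det12_eq0 x y z hx hy hD hz) as d0.
    apply nubar_fibre_vk in hz as [h1 [h2 [e1 [e2 e3]]]].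
    destruct z as [z1 z2]; cbn [fst snd] in *. destruct bx.
    + destruct (rotz_angle_spec x y z1 z2 hm) as [o1 o2]; [apply same_rotz_orbit_intro; auto; lra|].
      rewrite o1, o2. auto.
    + destruct (rotz_angle_spec y x z2 z1 hm) as [o1 o2].
      { apply same_rotz_orbit_intro; auto.
        - rewrite (dot_comm z2 z1), (dot_comm y x). exact e3.
        - rewrite (det12_swap z1 z2), (det12_swap x y). lra. }
      rewrite o1, o2. auto.
  - unfold ed33. apply cont_pair; try (unfold ed3; nn); apply cont_rotz; (apply cont_id || apply cont_const3).
  - apply cont_rotz_angle. destruct bx; [apply cont_fst_id|apply cont_snd_id].
Qed.

Lemma hopf_sections_circle A B p0 q0 : S2 A -> S2 B -> S3 p0 -> S3 q0 ->
  hopf_sections ed2 circle A B (fun cs => (rotz cs (piX A p0), rotz cs (piX B q0)))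
    (rot_lift A p0) (rot_lift B q0).
Proof.
  intros hA hB hp0 hq0. unfold hopf_sections; repeat match goal with |- _ /\ _ => split end.
  - intros cs hcs. pose proof (rot_lift_spec A p0 cs hA hp0 hcs) as [sA eA].
    pose proof (rot_lift_spec B q0 cs hB hq0 hcs) as [sB eB]. auto.
  - apply cont_rot_lift. apply cont_const4. apply cont_id.
  - apply cont_rot_lift. apply cont_const4. apply cont_id.
Qed.

Lemma qlerp0 a b : qadd (qscale (1-0) a) (qscale 0 b) = a.
Proof. destruct a as [[[? ?] ?] ?]; destruct b as [[[? ?] ?] ?]; unfold qadd, qscale; split_coords; ring. Qed.
Lemma qlerp1 a b : qadd (qscale (1-1) a) (qscale 1 b) = b.
Proof. destruct a as [[[? ?] ?] ?]; destruct b as [[[? ?] ?] ?]; unfold qadd, qscale; split_coords; ring. Qed.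

(* The sheet index [k] is read off the sign of [det12], which [yflip x y 1] reverses. *)
Lemma chart_two_circles_vk x y : S2 x -> S2 y -> det12 (x,y) <> 0 ->
  fibre_chart d_two_circles two_circles (nubar_fibre vk (nubar vk (x,y)))
    (fun t => (rotz (fst t) x, rotz (fst t) (yflip x y (snd t))))
    (fun z => (rotz_angle x (fst z), (det12 (x,y) - det12 z)/(2 * det12 (x,y)))).
Proof.
  intros hx hy hD. pose proof (planar_norm2_pos x y hD) as hm.
  set (D := det12 (x,y)) in *.
  unfold fibre_chart; repeat match goal with |- _ /\ _ => split end.
  - intros [cs k] [hcs hk]. cbn [fst snd] in *. apply nubar_fibre_vk. cbn [fst snd]. repeat split.
    + apply rotz_S2; auto.
    + apply rotz_S2; auto. apply yflip_S2; auto.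
    + apply rotz_snd.
    + rewrite rotz_snd. apply yflip_snd.
    + rewrite rotz_dot by auto. apply yflip_dot; auto.
  - intros z hz. pose proof (nubar_fibre_vk_det12_sqr x y z hx hy hz) as sq.
    apply nubar_fibre_vk in hz as [h1 [h2 [e1 [e2 e3]]]].
    split; cbn [fst snd].
    + apply rotz_angle_circle; auto. apply planar_norm2_eq; auto.
    + fold D in sq. destruct (pow2_eq_cases _ _ sq) as [e|e]; rewrite e; [left|right]; field; auto.
  - intros [cs k] [hcs hk]. cbn [fst snd] in *. f_equal.
    + apply rotz_angle_rotz; auto.
    + rewrite rotz_det12, yflip_det12 by auto. fold D. field. auto.
  - intros z hz. pose proof (nubar_fibre_vk_det12_sqr x y z hx hy hz) as sq. fold D in sq.
    apply nubar_fibre_vk in hz as [h1 [h2 [e1 [e2 e3]]]].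
    destruct z as [z1 z2]; cbn [fst snd] in *.
    destruct (pow2_eq_cases _ _ sq) as [e|e].
    + replace ((D - det12 (z1,z2))/(2*D)) with 0 by (rewrite e; field; auto).
      rewrite yflip0 by auto.
      destruct (rotz_angle_spec x y z1 z2 hm) as [o1 o2]; [apply same_rotz_orbit_intro; auto|]. rewrite o1, o2; auto.
    + replace ((D - det12 (z1,z2))/(2*D)) with 1 by (rewrite e; field; auto).
      destruct (rotz_angle_spec x (yflip x y 1) z1 z2 hm) as [o1 o2].
      { apply same_rotz_orbit_intro; auto.
        - rewrite yflip_snd. auto.
        - rewrite yflip_dot by auto. auto.
        - rewrite yflip_det12 by auto. fold D. rewrite e. ring. }
      rewrite o1, o2; auto.
  - unfold ed33, d_two_circles. apply cont_pair; try (unfold ed3; nn).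
    + apply cont_rotz. apply cont_fst_id. apply cont_const3.
    + apply cont_rotz. apply cont_fst_id. apply cont_yflip. apply cont_snd_id.
  - unfold d_two_circles. apply cont_pair; try (unfold ed2; nn).
    + apply cont_rotz_angle. apply cont_fst_id.
    + unfold Rdiv. apply cont_mult; [apply cont_minus; [apply cont_const| apply cont_det12; apply cont_id]| apply cont_const].
Qed.

Lemma hopf_sections_two_circles A B x y p0 q0 q1 : S2 A -> S2 B -> S3 p0 -> S3 q0 -> S3 q1 ->
  piX A p0 = x -> piX B q0 = y -> piX B q1 = yflip x y 1 -> 0 < planar_norm2 x ->
  hopf_sections d_two_circles two_circles A B
    (fun t => (rotz (fst t) x, rotz (fst t) (yflip x y (snd t))))
    (fun t => rot_lift A p0 (fst t))
    (fun t => rot_lift B (qadd (qscale (1 - snd t) q0) (qscale (snd t) q1)) (fst t)).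
Proof.
  intros hA hB hp0 hq0 hq1 ep0 eq0 eq1 hm. unfold hopf_sections; repeat match goal with |- _ /\ _ => split end.
  - intros [cs k] [hcs hk]. cbn [fst snd] in *.
    set (qk := qadd (qscale (1 - k) q0) (qscale k q1)).
    assert (eqk : S3 qk /\ piX B qk = yflip x y k).
    { unfold qk. destruct hk; subst k; [rewrite qlerp0, yflip0 by auto|rewrite qlerp1]; auto. }
    destruct eqk as [sk eqk].
    pose proof (rot_lift_spec A p0 cs hA hp0 hcs) as [sA eA].
    pose proof (rot_lift_spec B qk cs hB sk hcs) as [sB eB]. rewrite ep0 in eA. rewrite eqk in eB. auto.
  - apply cont_rot_lift. apply cont_const4. unfold d_two_circles. apply cont_fst_id.
  - apply cont_rot_lift.
    + apply cont_qadd; apply cont_qscale; try apply cont_const4.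
      * apply cont_minus; [apply cont_const| apply cont_snd_id].
      * apply cont_snd_id.
    + unfold d_two_circles. apply cont_fst_id.
Qed.

(** * Reduction to [C = vk] *)

Lemma nubar_fibre_transport C N r z : S3 r -> piX C r = vk ->
  (nubar_fibre C N z <-> nubar_fibre vk N (piX (fst z) r, piX (snd z) r)).
Proof.
  intros hr hC. destruct z as [z1 z2]. unfold nubar_fibre, S2xS2, nubar, S2; cbn [fst snd].
  rewrite <- hC, !dot_piX_S3 by auto. tauto.
Qed.

Lemma chart_transport {Xt} (dT : Xt -> Xt -> R) T A B C N f g sA sB r : S3 r -> piX C r = vk ->
  fibre_chart dT T (nubar_fibre vk N) f g -> hopf_sections dT T A B f sA sB ->
  fibre_chart dT T (nubar_fibre C N) (fun t => (piX (fst (f t)) (qconj r), piX (snd (f t)) (qconj r)))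
                               (fun z => g (piX (fst z) r, piX (snd z) r)) /\
  hopf_sections dT T A B (fun t => (piX (fst (f t)) (qconj r), piX (snd (f t)) (qconj r)))
                 (fun t => qmul (sA t) (qconj r)) (fun t => qmul (sB t) (qconj r)).
Proof.
  intros hr hC [h1 [h2 [h3 [h4 [h5 h6]]]]] [s1 [s2 s3]]. 
  set (Rp := fun z : R3*R3 => (piX (fst z) r, piX (snd z) r)).
  set (Rip := fun z : R3*R3 => (piX (fst z) (qconj r), piX (snd z) (qconj r))).
  assert (RRip : forall z, Rp (Rip z) = z).
  { intros [a b]. unfold Rp, Rip; cbn [fst snd]. rewrite !piX_conj_piX; auto. }
  assert (RipR : forall z, Rip (Rp z) = z).
  { intros [a b]. unfold Rp, Rip; cbn [fst snd]. rewrite !piX_piX_conj; auto. }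
  assert (FC : forall z, nubar_fibre C N z <-> nubar_fibre vk N (Rp z)) by (intro; apply nubar_fibre_transport; auto).
  change (fibre_chart dT T (nubar_fibre C N) (fun t => Rip (f t)) (fun z => g (Rp z)) /\
    hopf_sections dT T A B (fun t => Rip (f t)) (fun t => qmul (sA t) (qconj r)) (fun t => qmul (sB t) (qconj r))).
  unfold fibre_chart, hopf_sections; repeat match goal with |- _ /\ _ => split end.
  - intros t ht. apply (proj2 (FC _)). rewrite RRip. auto.
  - intros z hz. apply h2, (proj1 (FC z)), hz.
  - intros t ht. rewrite RRip. auto.
  - intros z hz. rewrite h4 by (apply (proj1 (FC z)); auto). apply RipR.
  - unfold Rip. unfold ed33. apply cont_pair; try (unfold ed3; nn).
    + apply cont_piX_vec. apply (cont_fst_of _ _ ed3). exact h5.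
    + apply cont_piX_vec. apply (cont_snd_of _ ed3). exact h5.
  - eapply (cont_comp _ _ _ _ _ Rp); [| intros z hz; exact (proj1 (FC z) hz) | exact h6].
    unfold Rp, ed33. apply cont_pair; try (unfold ed3; nn).
    + apply cont_piX_vec. apply cont_fst_id.
    + apply cont_piX_vec. apply cont_snd_id.
  - intros t ht. destruct (s1 t ht) as [a1 [a2 [a3 a4]]]. unfold Rip; cbn [fst snd].
    repeat split; try apply S3_mul; try apply S3_conj; auto.
    + rewrite piX_mul, a3. auto.
    + rewrite piX_mul, a4. auto.
  - apply cont_qmul; auto. apply cont_const4.
  - apply cont_qmul; auto. apply cont_const4.
Qed.

Lemma fibre_homeos_vk {Xt} (dT : Xt -> Xt -> R) T A B C N r f g sA sB :
  S2 A -> S2 B -> nonnegd dT -> S3 r -> piX C r = vk ->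
  fibre_chart dT T (nubar_fibre vk N) f g -> hopf_sections dT T A B f sA sB ->
  homeomorphic ed33 dT (nubar_fibre C N) T /\
  homeomorphic ed44 (dprod (dprod dT ed2) ed2) (nu_fibre A B C N)
    (fun w => T (fst (fst w)) /\ circle (snd (fst w)) /\ circle (snd w)).
Proof.
  intros hA hB nd hr hC FD SD.
  destruct (chart_transport dT T A B C N f g sA sB r hr hC FD SD) as [FD' SD'].
  split; [exact (homeo_of_chart _ _ _ _ _ FD') | exact (nu_fibre_homeo _ _ A B C N _ _ _ _ hA hB nd FD' SD')].
Qed.

(** * Spans and the Gram determinant *)

Definition cross (u v : R3) : R3 :=
  let '(u1,u2,u3) := u in let '(v1,v2,v3) := v in (u2*v3-u3*v2, u3*v1-u1*v3, u1*v2-u2*v1).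
Definition det3 (u v w : R3) : R := dot u (cross v w).
Definition gram (v : R3) : R := let '(a,b,c) := v in 1 + 2*a*b*c - a^2 - b^2 - c^2.

Lemma cont_gram : cont_on ed3 edR (fun _ => True) gram.
Proof.
  apply (cont_ext _ _ _ (fun x => gram (eta3 x))); [|intros; rewrite eta3_id; auto].
  unfold gram, eta3; simpl. cont_tac.
Qed.

Lemma gram_dot_det3 x y C : dot x x * dot y y * dot C C + 2 * dot x y * dot x C * dot y C
  - dot x y ^2 * dot C C - dot x C ^2 * dot y y - dot y C ^2 * dot x x = (det3 x y C)^2.
Proof. destruct_coords; unfold dot, det3, cross; simpl; ring. Qed.

Lemma gram_nubar x y C : S2 x -> S2 y -> S2 C -> gram (nubar C (x,y)) = (det3 x y C)^2.
Proof. unfold S2; intros hx hy hC. rewrite <- gram_dot_det3, hx, hy, hC. unfold gram, nubar; cbn [fst snd]. ring. Qed.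

Lemma Forall_inv3 (P : R -> Prop) a b c : Forall P [a;b;c] -> P a /\ P b /\ P c.
Proof. intro h. split; [exact (Forall_inv h)|split; [exact (Forall_inv (Forall_inv_tail h))|exact (Forall_inv (Forall_inv_tail (Forall_inv_tail h)))]]. Qed.

Lemma Forall_inv2 (P : R -> Prop) a b : Forall P [a;b] -> P a /\ P b.
Proof. intro h. split; [exact (Forall_inv h)|exact (Forall_inv (Forall_inv_tail h))]. Qed.

Lemma in_span1_inv b1 v : in_span [b1] v -> exists c, v = vscale c b1.
Proof. intros [cs [l e]]. destruct cs as [|c [|]]; try discriminate. exists c. rewrite <- e. simpl. destruct_coords; unfold_quat; split_coords; ring. Qed.
Lemma in_span2_inv b1 b2 v : in_span [b1;b2] v -> exists c1 c2, v = vadd (vscale c1 b1) (vscale c2 b2).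
Proof. intros [cs [l e]]. destruct cs as [|c1 [|c2 [|]]]; try discriminate. exists c1, c2. rewrite <- e. simpl. destruct_coords; unfold_quat; split_coords; ring. Qed.
Lemma in_span3_inv b1 b2 b3 v : in_span [b1;b2;b3] v -> exists c1 c2 c3, v = vadd (vscale c1 b1) (vadd (vscale c2 b2) (vscale c3 b3)).
Proof. intros [cs [l e]]. destruct cs as [|c1 [|c2 [|c3 [|]]]]; try discriminate. exists c1, c2, c3. rewrite <- e. simpl. destruct_coords; unfold_quat; split_coords; ring. Qed.
Lemma in_span3_1 (b1 b2 b3 : R3) : in_span [b1;b2;b3] b1.
Proof. exists [1;0;0]. split; auto. simpl. destruct_coords; unfold_quat; split_coords; ring. Qed.
Lemma in_span3_2 (b1 b2 b3 : R3) : in_span [b1;b2;b3] b2.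
Proof. exists [0;1;0]. split; auto. simpl. destruct_coords; unfold_quat; split_coords; ring. Qed.
Lemma in_span3_3 (b1 b2 b3 : R3) : in_span [b1;b2;b3] b3.
Proof. exists [0;0;1]. split; auto. simpl. destruct_coords; unfold_quat; split_coords; ring. Qed.
Lemma in_span2_1 (b1 b2 : R3) : in_span [b1;b2] b1.
Proof. exists [1;0]. split; auto. simpl. destruct_coords; unfold_quat; split_coords; ring. Qed.
Lemma in_span2_2 (b1 b2 : R3) : in_span [b1;b2] b2.
Proof. exists [0;1]. split; auto. simpl. destruct_coords; unfold_quat; split_coords; ring. Qed.
Lemma dot_self_eq0 (v : R3) : dot v v = 0 -> v = vzero.
Proof. destruct v as [[a b] c]; unfold dot, vzero; simpl; intro h.
  assert (a = 0) by nra. assert (b = 0) by nra. assert (c = 0) by nra. subst; auto. Qed.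

Lemma span_dim1_collinear x y C : S2 x -> S2 y -> S2 C -> span_dim [x;y;C] 1 ->
  exists lx ly, (lx = 1 \/ lx = -1) /\ (ly = 1 \/ ly = -1) /\ x = vscale lx C /\ y = vscale ly C.
Proof.
  intros hx hy hC [b [lb [ind sp]]]. destruct b as [|b1 [|]]; try discriminate.
  destruct (in_span1_inv _ _ (proj2 (sp x) (in_span3_1 x y C))) as [cx ex].
  destruct (in_span1_inv _ _ (proj2 (sp y) (in_span3_2 x y C))) as [cy ey].
  destruct (in_span1_inv _ _ (proj2 (sp C) (in_span3_3 x y C))) as [cc ec].
  assert (nz : cc <> 0).
  { intro e. subst cc. unfold S2 in hC. rewrite ec in hC. destruct_coords; unfold_quat. lra. }
  assert (par : forall v c, v = vscale c b1 -> S2 v -> exists l, (l = 1 \/ l = -1) /\ v = vscale l C).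
  { intros v c ev hv. exists (c/cc).
    assert (E : v = vscale (c/cc) C).
    { rewrite ev, ec. destruct_coords; unfold_quat; split_coords; field; auto. }
    split; auto. unfold S2 in hv, hC. rewrite E in hv.
    assert (D : dot (vscale (c/cc) C) (vscale (c/cc) C) = (c/cc)^2 * dot C C) by (destruct_coords; unfold_quat; ring).
    rewrite D, hC in hv. apply pow2_eq_cases. lra. }
  destruct (par x cx ex hx) as [lx [h1 h2]]. destruct (par y cy ey hy) as [ly [h3 h4]].
  exists lx, ly. auto.
Qed.

Lemma span_dim2_coplanar x y C : S2 x -> S2 y -> S2 C -> span_dim [x;y;C] 2 ->
  det3 x y C = 0 /\ ~ ((exists lx, x = vscale lx C) /\ (exists ly, y = vscale ly C)).
Proof.
  intros hx hy hC [b [lb [ind sp]]]. destruct b as [|b1 [|b2 [|]]]; try discriminate.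
  split.
  - destruct (in_span2_inv _ _ _ (proj2 (sp x) (in_span3_1 x y C))) as [a1 [a2 ex]].
    destruct (in_span2_inv _ _ _ (proj2 (sp y) (in_span3_2 x y C))) as [c1 [c2 ey]].
    destruct (in_span2_inv _ _ _ (proj2 (sp C) (in_span3_3 x y C))) as [d1 [d2 ec]].
    rewrite ex, ey, ec. destruct_coords; unfold_quat; unfold det3, cross; simpl; ring.
  - intros [[lx ex] [ly ey]].
    assert (pb : forall v, in_span [b1;b2] v -> exists n, v = vscale n C).
    { intros v hv. destruct (in_span3_inv _ _ _ _ (proj1 (sp v) hv)) as [c1 [c2 [c3 e]]].
      exists (c1*lx + c2*ly + c3). rewrite e, ex, ey. destruct_coords; unfold_quat; split_coords; ring. }
    destruct (pb b1 (in_span2_1 b1 b2)) as [n1 e1]. destruct (pb b2 (in_span2_2 b1 b2)) as [n2 e2].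
    pose proof (ind [n2; -n1] eq_refl) as I1.
    assert (Z1 : lincomb [n2; -n1] [b1;b2] = vzero) by (simpl; rewrite e1, e2; destruct_coords; unfold_quat; split_coords; ring).
    apply I1 in Z1. apply Forall_inv2 in Z1. destruct Z1 as [_ Z1].
    assert (n1 = 0) by lra. subst n1.
    pose proof (ind [1;0] eq_refl) as I2.
    assert (Z2 : lincomb [1; 0] [b1;b2] = vzero) by (simpl; rewrite e1; destruct_coords; unfold_quat; split_coords; ring).
    apply I2 in Z2. apply Forall_inv2 in Z2. destruct Z2. lra.
Qed.

Lemma det3_lincomb (a1 a2 a3 b1 b2 b3 c1 c2 c3 : R) x y C :
  det3 (vadd (vscale a1 x) (vadd (vscale a2 y) (vscale a3 C)))
       (vadd (vscale b1 x) (vadd (vscale b2 y) (vscale b3 C)))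
       (vadd (vscale c1 x) (vadd (vscale c2 y) (vscale c3 C)))
  = (a1*(b2*c3-b3*c2) - a2*(b1*c3-b3*c1) + a3*(b1*c2-b2*c1)) * det3 x y C.
Proof. destruct_coords; unfold_quat; unfold det3, cross; simpl; ring. Qed.

(* If [det3 b1 b2 b3 = 0], the identity [det3 * z = sum (z . (bj x bk)) bi] with
   [z = b1 x b2] gives [b1 x b2 = 0], and then [b2 x (b1 x b2) = 0] is a dependence. *)
Lemma lin_indep3_det3 b1 b2 b3 : lin_indep [b1;b2;b3] -> det3 b1 b2 b3 <> 0.
Proof.
  intros ind D.
  assert (idz : forall z, vscale (det3 b1 b2 b3) z =
     lincomb [dot z (cross b2 b3); dot z (cross b3 b1); dot z (cross b1 b2)] [b1;b2;b3]).
  { intro z. simpl. destruct_coords; unfold_quat; unfold det3, cross; simpl; split_coords; ring. }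
  set (n3 := cross b1 b2).
  pose proof (idz n3) as E. rewrite D in E.
  assert (Z : lincomb [dot n3 (cross b2 b3); dot n3 (cross b3 b1); dot n3 (cross b1 b2)] [b1;b2;b3] = vzero).
  { rewrite <- E. destruct_coords; unfold_quat; split_coords; ring. }
  apply ind in Z; [|reflexivity]. apply Forall_inv3 in Z. destruct Z as [_ [_ Z]].
  fold n3 in Z. apply dot_self_eq0 in Z.
  assert (Z2 : lincomb [dot b2 b2; - dot b1 b2; 0] [b1;b2;b3] = vzero).
  { transitivity (cross b2 n3). - unfold n3. simpl. destruct_coords; unfold_quat; unfold cross; simpl; split_coords; ring.
    - rewrite Z. destruct_coords; unfold_quat; unfold cross; simpl; split_coords; ring. }
  apply ind in Z2; [|reflexivity]. apply Forall_inv3 in Z2. destruct Z2 as [Z2 _].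
  apply dot_self_eq0 in Z2.
  assert (Z3 : lincomb [0; 1; 0] [b1;b2;b3] = vzero).
  { simpl. rewrite Z2. destruct_coords; unfold_quat; split_coords; ring. }
  apply ind in Z3; [|reflexivity]. apply Forall_inv3 in Z3. destruct Z3 as [_ [Z3 _]]. lra.
Qed.

Lemma span_dim3_det3 x y C : span_dim [x;y;C] 3 -> det3 x y C <> 0.
Proof.
  intros [b [lb [ind sp]]] D. destruct b as [|b1 [|b2 [|b3 [|]]]]; try discriminate.
  destruct (in_span3_inv _ _ _ _ (proj1 (sp b1) (in_span3_1 b1 b2 b3))) as [a1 [a2 [a3 e1]]].
  destruct (in_span3_inv _ _ _ _ (proj1 (sp b2) (in_span3_2 b1 b2 b3))) as [c1 [c2 [c3 e2]]].
  destruct (in_span3_inv _ _ _ _ (proj1 (sp b3) (in_span3_3 b1 b2 b3))) as [d1 [d2 [d3 e3]]].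
  apply (lin_indep3_det3 b1 b2 b3 ind). rewrite e1, e2, e3, det3_lincomb, D. ring.
Qed.

Lemma S2_eq_scale_of_dot z C l : S2 z -> S2 C -> dot z C = l -> l^2 = 1 -> z = vscale l C.
Proof.
  destruct z as [[z1 z2] z3]; destruct C as [[c1 c2] c3]; unfold S2, dot, vscale; cbn. intros h1 h2 e hl.
  assert (Q : (z1 - l*c1)^2 + (z2 - l*c2)^2 + (z3 - l*c3)^2 = 0).
  { apply (eq_of_lincomb4 _ _ 1 (z1*z1+z2*z2+z3*z3 - 1) (l^2) (c1*c1+c2*c2+c3*c3-1) (-2*l) (z1*c1+z2*c2+z3*c3 - l) (-1) (l^2-1)); [lra|lra|lra|lra|ring]. }
  assert (0 <= (z1 - l*c1)^2) by apply pow2_ge_0.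
  assert (0 <= (z2 - l*c2)^2) by apply pow2_ge_0.
  assert (0 <= (z3 - l*c3)^2) by apply pow2_ge_0.
  assert ((z1 - l*c1)^2 = 0) by lra. assert ((z2 - l*c2)^2 = 0) by lra. assert ((z3 - l*c3)^2 = 0) by lra.
  f_equal; [f_equal|]; nra.
Qed.

Lemma vscale_dot_l l C : S2 C -> dot (vscale l C) C = l.
Proof. destruct C as [[c1 c2] c3]; unfold S2, dot, vscale; cbn. intro h.
  apply (eq_of_lincomb1 _ _ l (c1*c1+c2*c2+c3*c3 - 1)); [lra|ring]. Qed.
Lemma vscale_dot_scale l m C : S2 C -> dot (vscale l C) (vscale m C) = l*m.
Proof. destruct C as [[c1 c2] c3]; unfold S2, dot, vscale; cbn. intro h.
  apply (eq_of_lincomb1 _ _ (l*m) (c1*c1+c2*c2+c3*c3 - 1)); [lra|ring]. Qed.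

(** * The image [DeltaSet C] *)

Lemma DeltaSet_bounds C v : S2 C -> DeltaSet C v -> 0 <= gram v /\
  -1 <= fst (fst v) <= 1 /\ -1 <= snd (fst v) <= 1 /\ -1 <= snd v <= 1.
Proof.
  intros hC [[x y] [[hx hy] e]]. subst v. cbn [fst snd] in *. rewrite gram_nubar by auto. split.
  - apply pow2_ge_0.
  - unfold nubar; cbn [fst snd]. repeat split; try apply dot_S2_bounds; auto.
Qed.

Lemma ed3_small (u1 u2 u3 w1 w2 w3 : R) r : 0 < r ->
  Rabs (u1 - w1) < r/4 -> Rabs (u2 - w2) < r/4 -> Rabs (u3 - w3) < r/2 ->
  ed3 (u1,u2,u3) (w1,w2,w3) < r.
Proof.
  intros hr h1 h2 h3. unfold ed3. apply dprod_small; [apply nonneg_dprod|apply nonneg_edR|exact hr| |unfold edR; exact h3].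
  unfold ed2. apply dprod_small; [apply nonneg_edR|apply nonneg_edR|lra|unfold edR; simpl; lra|unfold edR; simpl; lra].
Qed.

(* When [gram v = 0] and [a * b * c < 1] (which holds unless [b^2 = c^2 = 1]),
   [gram ((1 + d) v) < 0] for small [d > 0], so points just outside [v] miss [DeltaSet C]. *)
Lemma not_interior_of_gram0 C v : S2 C -> DeltaSet C v -> gram v = 0 -> ~ (snd (fst v)^2 = 1 /\ snd v ^2 = 1) ->
  ~ interior3 (DeltaSet C) v.
Proof.
  intros hC hv g0 npar [r [hr H]].
  destruct (DeltaSet_bounds C v hC hv) as [_ [[a1 a2] [[b1 b2] [c1 c2]]]].
  destruct v as [[a b] c]. cbn [fst snd] in *.
  set (k := a*b*c).
  assert (hk : k < 1).
  { destruct (Rlt_or_le k 1) as [l|l]; auto. exfalso. apply npar. unfold k in l.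
    assert (q1 : (a*b*c)^2 >= 1) by nra.
    assert (ha : a^2 <= 1) by nra. assert (hb : b^2 <= 1) by nra. assert (hc2 : c^2 <= 1) by nra.
    assert (P : 0 <= (1-a^2)*(b*c)^2) by (apply Rmult_le_pos; [lra|apply pow2_ge_0]).
    assert (q2 : (b*c)^2 >= 1) by (replace ((a*b*c)^2) with (a^2*(b*c)^2) in q1 by ring; lra).
    assert (P1 : 0 <= b^2*(1-c^2)) by (apply Rmult_le_pos; [apply pow2_ge_0|lra]).
    assert (P2 : 0 <= c^2*(1-b^2)) by (apply Rmult_le_pos; [apply pow2_ge_0|lra]).
    replace ((b*c)^2) with (b^2*c^2) in q2 by ring.
    split; lra. }
  set (d := Rmin (r/8) ((1-k)/8)).
  assert (dp : 0 < d) by (apply Rmin_glb_lt; lra).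
  assert (d1 : d <= r/8) by apply Rmin_l. assert (d2 : d <= (1-k)/8) by apply Rmin_r.
  set (t := 1 + d).
  assert (W : DeltaSet C (t*a, t*b, t*c)).
  { apply H. apply ed3_small; auto;
    [replace (a - t*a) with (-(d*a)) by (unfold t; ring)
    |replace (b - t*b) with (-(d*b)) by (unfold t; ring)
    |replace (c - t*c) with (-(d*c)) by (unfold t; ring)];
    rewrite Rabs_Ropp, Rabs_mult, (Rabs_right d) by lra;
    (apply Rle_lt_trans with (d*1); [apply Rmult_le_compat_l; [lra|apply Rabs_le; lra]|lra]). }
  destruct (DeltaSet_bounds C _ hC W) as [gw _].
  unfold gram in gw, g0.
  assert (S : a^2+b^2+c^2 = 1 + 2*k) by (unfold k; lra).
  assert (G : 1 + 2*(t*a)*(t*b)*(t*c) - (t*a)^2 - (t*b)^2 - (t*c)^2 = d * (2*k*t^2 - t - 1)).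
  { transitivity (1 + 2*t^3*k - t^2*(a^2+b^2+c^2)); [unfold k; ring|]. rewrite S. unfold t. ring. }
  rewrite G in gw.
  assert (neg : 2*k*t^2 - t - 1 < 0).
  { unfold t. destruct (Rle_lt_dec k 0).
    - assert (0 <= (1+d)^2) by apply pow2_ge_0. nra.
    - assert ((1+d)^2 <= 1 + 3*d) by nra. nra. }
  nra.
Qed.

(* Witness [x = (sqrt (1 - b^2), 0, b)], [y = (al, be, c)]; [gram >= 0] is [al^2 + c^2 <= 1]. *)
Lemma DeltaSet_vk_of_gram a b c : 0 <= gram (a,b,c) -> b^2 < 1 -> DeltaSet vk (a,b,c).
Proof.
  intros g hb. unfold gram in g.
  set (sb := sqrt (1 - b^2)).
  assert (sb2 : sb*sb = 1 - b^2) by (apply sqrt_sqrt; lra).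
  assert (sbp : 0 < sb) by (apply sqrt_lt_R0; lra).
  set (al := (a - b*c)/sb).
  assert (q : 0 <= 1 - c^2 - al^2).
  { assert (E : 1 - c^2 - al^2 = (1 + 2*a*b*c - a^2 - b^2 - c^2)/(sb*sb)).
    { unfold al. transitivity (((sb*sb)*(1-c^2) - (a-b*c)^2)/(sb*sb)); [field; lra|].
      rewrite sb2. f_equal. ring. }
    rewrite E. unfold Rdiv. apply Rmult_le_pos; [lra| apply Rlt_le, Rinv_0_lt_compat; nra]. }
  set (be := sqrt (1 - c^2 - al^2)).
  assert (be2 : be*be = 1 - c^2 - al^2) by (apply sqrt_sqrt; lra).
  exists ((sb, 0, b), (al, be, c)). unfold S2xS2, S2, nubar, vk, dot; cbn [fst snd]. split; [split|].
  - lra.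
  - lra.
  - split_coords; try ring. unfold al. field. lra.
Qed.

Lemma DeltaSet_of_gram C w : S2 C -> 0 <= gram w -> (snd (fst w))^2 < 1 -> DeltaSet C w.
Proof.
  intros hC g hb. destruct w as [[a b] c]. cbn [fst snd] in hb.
  destruct (DeltaSet_vk_of_gram a b c g hb) as [z hz].
  destruct (piX_surj C vk hC S2_vk) as [r [hr eC]].
  exists (piX (fst z) (qconj r), piX (snd z) (qconj r)).
  apply (nubar_fibre_transport C (a,b,c) r _ hr eC). cbn [fst snd]. rewrite !piX_conj_piX by auto.
  destruct z; exact hz.
Qed.

(* [gram w > 0] and [(snd (fst w))^2 < 1] are open conditions that put [w] in [DeltaSet C]. *)
Lemma interior_of_gram_pos C v : S2 C -> DeltaSet C v -> 0 < gram v -> interior3 (DeltaSet C) v.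
Proof.
  intros hC hv gp.
  destruct (DeltaSet_bounds C v hC hv) as [_ [[a1 a2] [[b1 b2] [c1 c2]]]].
  assert (hb : snd (fst v) ^2 < 1).
  { destruct v as [[a b] c]. cbn [fst snd] in *. unfold gram in gp.
    assert (E : 1 + 2*a*b*c - a^2 - b^2 - c^2 = (1 - b^2)*(1-c^2) - (a - b*c)^2) by ring.
    rewrite E in gp. destruct (Rlt_or_le (b^2) 1) as [l|l]; auto.
    assert (b^2 = 1) by nra. rewrite H in gp. assert (0 <= (a - b*c)^2) by apply pow2_ge_0. lra. }
  assert (cb : cont_on ed3 edR (fun _ => True) (fun w : R3 => 1 - snd (fst w) ^2)).
  { simpl. cont_tac. }
  destruct (cont_gram v I (gram v) gp) as [d1 [hd1 near1]].
  destruct (cb v I (1 - snd (fst v)^2) ltac:(lra)) as [d2 [hd2 near2]].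
  exists (Rmin d1 d2). split; [apply Rmin_glb_lt; auto|].
  intros w hw. apply DeltaSet_of_gram; auto.
  - assert (k := near1 w I (Rlt_le_trans _ _ _ hw (Rmin_l _ _))). unfold edR in k.
    apply Rabs_def2 in k. lra.
  - assert (k := near2 w I (Rlt_le_trans _ _ _ hw (Rmin_r _ _))). unfold edR in k.
    apply Rabs_def2 in k. lra.
Qed.

Lemma point_torus2_homeo : homeomorphic (dprod (dprod edR ed2) ed2) d_torus2
   (fun w => fst (fst w) = 0 /\ circle (snd (fst w)) /\ circle (snd w)) torus2.
Proof.
  exists (fun w : R * R2 * R2 => (snd (fst w), snd w)), (fun w : R2 * R2 => ((0, fst w), snd w)).
  repeat match goal with |- _ /\ _ => split end.
  - intros w [_ [c1 c2]]. split; auto.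
  - intros w [c1 c2]. cbn. auto.
  - intros [[t u] v] [ht _]. cbn in *. subst. auto.
  - intros [u v] _. auto.
  - unfold d_torus2. apply cont_pair; try (unfold ed2; nn). apply cont_sndfst. apply cont_snd_id.
  - unfold d_torus2. apply cont_pair; try (unfold ed2; nn); [|apply cont_snd_id].
    apply cont_pair; [nn| unfold ed2; nn | apply cont_const | apply cont_fst_id].
Qed.

Lemma nu_fibre_of_point_homeo A B C N x y : S2 A -> S2 B -> S2 x -> S2 y ->
  (forall xy, nubar_fibre C N xy <-> xy = (x, y)) ->
  homeomorphic ed44 d_torus2 (nu_fibre A B C N) torus2.
Proof.
  intros hA hB hx hy fib.
  destruct (piX_surj A x hA hx) as [p0 [hp0 ep0]]. destruct (piX_surj B y hB hy) as [q0 [hq0 eq0]].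
  assert (FD : fibre_chart edR (fun t : R => t = 0) (nubar_fibre C N) (fun _ => (x,y)) (fun _ => 0)).
  { unfold fibre_chart; repeat match goal with |- _ /\ _ => split end.
    - intros; apply fib; auto.
    - auto.
    - intros; auto.
    - intros z hz. symmetry. apply fib; auto.
    - unfold ed33. apply cont_pair; try (unfold ed3; nn); apply cont_const3.
    - apply cont_const. }
  assert (SD : hopf_sections edR (fun t : R => t = 0) A B (fun _ => (x,y)) (fun _ => p0) (fun _ => q0)).
  { unfold hopf_sections; repeat match goal with |- _ /\ _ => split end; try apply cont_const4.
    intros; repeat split; auto. }
  exact (homeo_trans _ _ _ _ _ _ (nu_fibre_homeo edR _ A B C _ _ _ _ _ hA hB nonneg_edR FD SD) point_torus2_homeo).
Qed.

Lemma case_span1 A B C lx ly : S2 A -> S2 B -> S2 C -> (lx = 1 \/ lx = -1) -> (ly = 1 \/ ly = -1) ->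
  let x := vscale lx C in let y := vscale ly C in
  Vset (nubar C (x, y)) /\
  (forall xy, nubar_fibre C (nubar C (x, y)) xy <-> xy = (x, y)) /\
  homeomorphic ed44 d_torus2 (nu_fibre A B C (nubar C (x, y))) torus2.
Proof.
  intros hA hB hC hlx hly x y.
  assert (hx : S2 x) by (unfold x, S2; rewrite vscale_dot_scale by auto; destruct hlx; subst; ring).
  assert (hy : S2 y) by (unfold y, S2; rewrite vscale_dot_scale by auto; destruct hly; subst; ring).
  assert (EN : nubar C (x,y) = (lx*ly, lx, ly)).
  { unfold nubar; cbn [fst snd]. unfold x, y. rewrite vscale_dot_scale, !vscale_dot_l by auto. auto. }
  assert (fib : forall xy, nubar_fibre C (nubar C (x, y)) xy <-> xy = (x, y)).
  { intros [a b]. rewrite EN. unfold nubar_fibre, S2xS2, nubar; cbn [fst snd]. split.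
    - intros [[ha hb] e]. injection e; intros e3 e2 _.
      unfold x, y. f_equal; apply S2_eq_scale_of_dot; auto.
      all: first [destruct hlx as [e'|e']; rewrite e'; ring | destruct hly as [e'|e']; rewrite e'; ring].
    - intros e. injection e; intros; subst. repeat split; auto. }
  split; [|split; [exact fib|exact (nu_fibre_of_point_homeo A B C _ x y hA hB hx hy fib)]].
  rewrite EN. unfold Vset. destruct hlx, hly; subst; [left|right;right;left|right;right;right|right;left];
    split_coords; ring.
Qed.

Lemma two_circles_torus_homeo : homeomorphic (dprod (dprod d_two_circles ed2) ed2) d_two_torus3
   (fun w => two_circles (fst (fst w)) /\ circle (snd (fst w)) /\ circle (snd w)) two_torus3.
Proof.
  exists (fun w : R2 * R * R2 * R2 => (((fst (fst (fst w)), snd (fst w)), snd w), snd (fst (fst w)))).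
  exists (fun u : R2 * R2 * R2 * R => (((fst (fst (fst u)), snd u), snd (fst (fst u))), snd (fst u))).
  repeat match goal with |- _ /\ _ => split end.
  - intros [[[cs k] u] v] [[h1 h2] [h3 h4]]. cbn in *. unfold two_torus3, torus3; cbn. auto.
  - intros [[[cs u] v] k] [[h1 [h2 h3]] h4]. cbn in *. unfold two_circles; cbn. auto.
  - intros [[[cs k] u] v] _. reflexivity.
  - intros [[[cs u] v] k] _. reflexivity.
  - unfold d_two_torus3, d_torus3. cont_tac.
  - unfold d_two_torus3, d_torus3. cont_tac.
Qed.

Lemma det3_vk u v : det3 u v vk = det12 (u,v).
Proof. destruct u as [[u1 u2] u3]; destruct v as [[v1 v2] v3]. unfold det3, det12, cross, dot, vk; simpl. ring. Qed.
Lemma dot_vk u : dot u vk = snd u.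
Proof. destruct u as [[u1 u2] u3]. unfold dot, vk; simpl. ring. Qed.
Lemma planar_norm2_S2 u : S2 u -> planar_norm2 u = 1 - (snd u)^2.
Proof. destruct u as [[u1 u2] u3]. unfold S2, planar_norm2, dot; simpl. intro; lra. Qed.
Lemma ed3_refl v : ed3 v v = 0.
Proof. unfold ed3, ed2, dprod, edR. rewrite !Rminus_diag, Rabs_R0.
  replace (0^2+0^2) with 0 by ring. rewrite sqrt_0. replace (0^2+0^2) with 0 by ring. apply sqrt_0. Qed.

Section Frame.
Variables (C : R3) (r : R4).
Hypotheses (hr : S3 r) (hCr : piX C r = vk).

Lemma nubar_frame x y : nubar C (x,y) = nubar vk (piX x r, piX y r).
Proof. unfold nubar; cbn [fst snd]. rewrite <- hCr, !dot_piX_S3 by auto. reflexivity. Qed.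

Lemma snd_piX_frame x : snd (piX x r) = dot x C.
Proof. rewrite <- dot_vk, <- hCr, dot_piX_S3; auto. Qed.

Lemma det12_frame_sqr x y : S2 C -> S2 x -> S2 y -> det12 (piX x r, piX y r) ^ 2 = det3 x y C ^ 2.
Proof.
  intros hC hx hy. rewrite <- det3_vk, <- gram_nubar, <- nubar_frame, gram_nubar by (auto using S2_piX, S2_vk).
  reflexivity.
Qed.

End Frame.

Lemma case_span2 A B C x y : S2 A -> S2 B -> S2 C -> S2 x -> S2 y -> det3 x y C = 0 ->
  ~ ((exists lx, x = vscale lx C) /\ (exists ly, y = vscale ly C)) ->
  (boundary3 (DeltaSet C) (nubar C (x, y)) /\ ~ Vset (nubar C (x, y))) /\
  homeomorphic ed33 ed2 (nubar_fibre C (nubar C (x, y))) circle /\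
  homeomorphic ed44 d_torus3 (nu_fibre A B C (nubar C (x, y))) torus3.
Proof.
  intros hA hB hC hx hy D0 npar.
  assert (np : ~ (dot x C ^ 2 = 1 /\ dot y C ^ 2 = 1)).
  { intros [e1 e2]. apply npar. split; eexists; apply S2_eq_scale_of_dot; eauto. }
  split; [split|].
  - split.
    + intros e he. exists (nubar C (x,y)). split; [exists (x,y); repeat split; auto|]. rewrite ed3_refl. auto.
    + apply not_interior_of_gram0; auto.
      * exists (x,y); repeat split; auto.
      * rewrite gram_nubar, D0 by auto. ring.
  - intros V. apply np. unfold Vset, nubar in V; cbn [fst snd] in V.
    destruct V as [V|[V|[V|V]]]; injection V; intros e1 e2 _; rewrite e1, e2; split; ring.
  - destruct (piX_surj C vk hC S2_vk) as [r [hr hCr]].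
    assert (dE : det12 (piX x r, piX y r) = 0) by (apply pow2_eq0; rewrite (det12_frame_sqr C r hr hCr), D0 by auto; ring).
    assert (bx : exists bx : bool, 0 < planar_norm2 (if bx then piX x r else piX y r)).
    { destruct (dot_S2_bounds x C hx hC), (dot_S2_bounds y C hy hC).
      destruct (Rlt_or_le (dot x C ^ 2) 1); [exists true|exists false];
        rewrite planar_norm2_S2, (snd_piX_frame C r hr hCr) by (auto using S2_piX); [lra|].
      destruct (Rlt_or_le (dot y C ^ 2) 1); [lra|]. exfalso; apply np; split; nra. }
    destruct bx as [bx hbx].
    destruct (piX_surj A (piX x r) hA (S2_piX x r hx hr)) as [p0 [hp0 ep0]].
    destruct (piX_surj B (piX y r) hB (S2_piX y r hy hr)) as [q0 [hq0 eq0]].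
    rewrite <- ep0, <- eq0 in dE, hbx. rewrite (nubar_frame C r hr hCr), <- ep0, <- eq0.
    apply (fibre_homeos_vk ed2 circle A B C _ r _ _ _ _ hA hB (nonneg_dprod _ _) hr hCr
      (chart_circle_vk _ _ bx (S2_piX A p0 hA hp0) (S2_piX B q0 hB hq0) dE hbx)
      (hopf_sections_circle A B p0 q0 hA hB hp0 hq0)).
Qed.

Lemma case_span3 A B C x y : S2 A -> S2 B -> S2 C -> S2 x -> S2 y -> det3 x y C <> 0 ->
  interior3 (DeltaSet C) (nubar C (x, y)) /\
  homeomorphic ed33 d_two_circles (nubar_fibre C (nubar C (x, y))) two_circles /\
  homeomorphic ed44 d_two_torus3 (nu_fibre A B C (nubar C (x, y))) two_torus3.
Proof.
  intros hA hB hC hx hy D0.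
  split.
  - apply interior_of_gram_pos; auto.
    + exists (x,y); repeat split; auto.
    + rewrite gram_nubar by auto. destruct (Rdichotomy _ _ D0); nra.
  - destruct (piX_surj C vk hC S2_vk) as [r [hr hCr]].
    assert (dE : det12 (piX x r, piX y r) <> 0).
    { intro e. apply D0, pow2_eq0. rewrite <- (det12_frame_sqr C r hr hCr), e by auto. ring. }
    pose proof (planar_norm2_pos _ _ dE) as hm.
    pose proof (yflip_S2 (piX x r) (piX y r) 1 hm (or_intror eq_refl) (S2_piX y r hy hr)) as hy1.
    destruct (piX_surj A (piX x r) hA (S2_piX x r hx hr)) as [p0 [hp0 ep0]].
    destruct (piX_surj B (piX y r) hB (S2_piX y r hy hr)) as [q0 [hq0 eq0]].
    destruct (piX_surj B _ hB hy1) as [q1 [hq1 eq1]].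
    rewrite (nubar_frame C r hr hCr).
    destruct (fibre_homeos_vk d_two_circles two_circles A B C _ r _ _ _ _ hA hB (nonneg_dprod _ _) hr hCr
      (chart_two_circles_vk _ _ (S2_piX x r hx hr) (S2_piX y r hy hr) dE)
      (hopf_sections_two_circles A B _ _ p0 q0 q1 hA hB hp0 hq0 hq1 ep0 eq0 eq1 hm))
      as [H1 H2].
    split; [exact H1|]. exact (homeo_trans _ _ _ _ _ _ H2 two_circles_torus_homeo).
Qed.

Lemma nubar_vertices C : S2 C ->
  nubar C (C, C) = (1, 1, 1) /\ nubar C (C, vopp C) = (-1, 1, -1) /\
  nubar C (vopp C, C) = (-1, -1, 1) /\ nubar C (vopp C, vopp C) = (1, -1, -1).
Proof.
  unfold S2. destruct C as [[c1 c2] c3]. unfold nubar, vopp, dot; cbn [fst snd].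
  intro hC. repeat split; split_coords; lra.
Qed.

Theorem mainTheorem8 (A B C : R3) (hA : S2 A) (hB : S2 B) (hC : S2 C)
  (x y : R3) (hx : S2 x) (hy : S2 y) :
  (span_dim (x :: y :: C :: nil)%list 1%nat ->
     Vset (nubar C (x, y)) /\
     (forall xy, nubar_fibre C (nubar C (x, y)) xy <-> xy = (x, y)) /\
     homeomorphic ed44 d_torus2 (nu_fibre A B C (nubar C (x, y))) torus2) /\
  (span_dim (x :: y :: C :: nil)%list 2%nat ->
     (boundary3 (DeltaSet C) (nubar C (x, y)) /\ ~ Vset (nubar C (x, y))) /\
     homeomorphic ed33 ed2 (nubar_fibre C (nubar C (x, y))) circle /\
     homeomorphic ed44 d_torus3 (nu_fibre A B C (nubar C (x, y))) torus3) /\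
  (span_dim (x :: y :: C :: nil)%list 3%nat ->
     interior3 (DeltaSet C) (nubar C (x, y)) /\
     homeomorphic ed33 d_two_circles (nubar_fibre C (nubar C (x, y))) two_circles /\
     homeomorphic ed44 d_two_torus3 (nu_fibre A B C (nubar C (x, y))) two_torus3) /\
  nubar C (C, C) = (1, 1, 1) /\
  nubar C (C, vopp C) = (-1, 1, -1) /\
  nubar C (vopp C, C) = (-1, -1, 1) /\
  nubar C (vopp C, vopp C) = (1, -1, -1).
Proof.
  split; [|split; [|split]].
  - intro sp. destruct (span_dim1_collinear x y C hx hy hC sp) as [lx [ly [hlx [hly [-> ->]]]]].
    apply case_span1; auto.
  - intro sp. destruct (span_dim2_coplanar x y C hx hy hC sp) as [D0 npar].
    apply case_span2; auto.
  - intro sp. apply case_span3; auto using span_dim3_det3.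
  - apply nubar_vertices; auto.
Qed.
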